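(* The Farey graph $F$ is a typical $\Pi$-graph, and every typical $\Pi$-graph is minor-equivalent to $F$. In other words, up to minor-equivalence, the Farey graph is the unique typical $\Pi$-graph.
   Context: Graphs are simple and may be infinite. The Farey graph $F$ is the graph with vertex set $\mathbb{Q}\cup\{\infty\}$ in which two rationals $a/b$ and $c/d$ written in lowest terms (allowing $\infty=(\pm1)/0$) are adjacent if and only if $ad-bc=\pm1$; any graph isomorphic to it is also called the Farey graph. A graph is infinitely edge-connected if it has at least two vertices and $G-E'$ is connected for every finite set $E'$ of edges. Paths are independent if they are internally vertex-disjoint. A $\Pi$-graph is an infinitely edge-connected graph that does not contain infinitely many independent paths between any two of its vertices. A graph $H$ is a minor of $G$ if there are pairwise disjoint non-empty vertex sets $V_h\subseteq V(G)$ ($h\in V(H)$), each inducing a connected subgraph of $G$ (the branch sets), such that for every edge $hh'$ of $H$ there is an edge of $G$ between $V_h$ and $V_{h'}$. A $\Pi$-graph is typical if it occurs as a minor in every $\Pi$-graph. Two graphs are minor-equivalent if each is a minor of the other. *)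

From Stdlib Require Import ZArith Lia List.
Import ListNotations.
Set Implicit Arguments.

Record graph := Graph {
  vert :> Type;
  adj : vert -> vert -> Prop;
  adj_sym : forall x y, adj x y -> adj y x;
  adj_irrefl : forall x, ~ adj x x
}.

Fixpoint chain {V : Type} (R : V -> V -> Prop) (l : list V) : Prop :=
  match l with
  | x :: ((y :: _) as t) => R x y /\ chain R t
  | _ => True
  end.

Definition is_path {V : Type} (R : V -> V -> Prop) (p : list V) (x y : V) : Prop :=
  hd_error p = Some x /\ last p x = y /\ NoDup p /\ chain R p.

Definition connected_in {V : Type} (R : V -> V -> Prop) (S : V -> Prop) : Prop :=
  forall x y, S x -> S y -> exists p, is_path R p x y /\ Forall S p.

Definition adj_minus (G : graph) (E' : list (G * G)) (x y : G) : Prop :=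
  adj G x y /\ ~ In (x, y) E' /\ ~ In (y, x) E'.

Definition inf_edge_connected (G : graph) : Prop :=
  (exists x y : G, x <> y) /\
  forall E' : list (G * G), connected_in (@adj_minus G E') (fun _ => True).

Definition interior {V : Type} (p : list V) : list V := removelast (tl p).

Definition inf_indep_paths (G : graph) : Prop :=
  exists (u v : G) (P : nat -> list G),
    u <> v /\
    (forall n, is_path (adj G) (P n) u v) /\
    (forall n m, P n = P m -> n = m) /\
    (forall n m w, n <> m -> In w (interior (P n)) -> ~ In w (interior (P m))).

Definition Pi_graph (G : graph) : Prop :=
  inf_edge_connected G /\ ~ inf_indep_paths G.

Definition minor (H G : graph) : Prop :=
  exists B : H -> G -> Prop,
    (forall h, exists g, B h g) /\
    (forall h h' g, h <> h' -> B h g -> ~ B h' g) /\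
    (forall h, connected_in (adj G) (B h)) /\
    (forall h h', adj H h h' -> exists g g', B h g /\ B h' g' /\ adj G g g').

Definition typical (G : graph) : Prop :=
  Pi_graph G /\ forall G' : graph, Pi_graph G' -> minor G G'.

Definition minor_equiv (G H : graph) : Prop := minor G H /\ minor H G.

(** Farey graph: vertices are Q ∪ {∞}, each written uniquely in lowest terms
    a/b with b > 0, and ∞ represented as 1/0. *)
Definition farey_vert : Type :=
  { p : Z * Z | Z.gcd (fst p) (snd p) = 1%Z /\
                ((0 < snd p)%Z \/ (snd p = 0%Z /\ fst p = 1%Z)) }.

Definition farey_adj (x y : farey_vert) : Prop :=
  let '(a, b) := proj1_sig x in
  let '(c, d) := proj1_sig y in
  (a * d - b * c = 1 \/ a * d - b * c = -1)%Z.

Lemma farey_adj_sym : forall x y, farey_adj x y -> farey_adj y x.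
Proof.
  intros [[a b] Hx] [[c d] Hy]; unfold farey_adj; simpl; lia.
Qed.

Lemma farey_adj_irrefl : forall x, ~ farey_adj x x.
Proof.
  intros [[a b] Hx]; unfold farey_adj; simpl; lia.
Qed.

Definition Farey : graph := @Graph farey_vert farey_adj farey_adj_sym farey_adj_irrefl.

(** Two adjacent vertices u, v are separated by
    {u+v, u-v}, and two non-adjacent ones by the ends of a Farey edge XY such
    that u and v lie in opposite quadrants of the basis (X, Y): along a Farey
    edge the product of the two coordinates never changes sign strictly. A
    deleted edge uv is bypassed through the mediant u+v, by recursion on the
    number of deleted edges inside the cone of (u, v), and every vertex reaches
    1/0 by decreasing its denominator.

    Conversely, let G be a Π-graph. Having no infinite family of independent
    paths, G has a finite separator S between any two disjoint finite vertex
    sets A, B. If A and B are linked through a region D (whichever finitely many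
    edges are deleted, some A–B path survives with all inner vertices in D),
    fixing the first and the last vertex of S met by such paths yields a finite
    connected core C in D, adjacent to A and to B, and disjoint regions of D - C
    linking A to C and C to B. Iterating this splitting along the Stern–Brocot
    tree gives every positive rational a finite connected branch set; a second
    tree in a disjoint region handles the negative rationals, and the two root
    sets serve as 0 and 1/0. Farey neighbours are exactly ends of Stern–Brocot
    intervals and their mediants, matching the adjacencies A–C–B of the
    splittings, so the Farey graph is a minor of every Π-graph. *)

From Stdlib Require Import ZArith Lia List FinFun.
From Stdlib Require Import Classical ClassicalEpsilon ProofIrrelevance.
Import ListNotations.
Set Implicit Arguments.

Section Walks.
Context {V : Type}.
Implicit Types (R : V -> V -> Prop) (l w p : list V).

Lemma chain_tl R x l : chain R (x :: l) -> chain R l.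
Proof. destruct l; simpl; tauto. Qed.

Lemma chain_impl R R' l : (forall x y, R x y -> R' x y) -> chain R l -> chain R' l.
Proof.
  intros H; induction l as [|x l IH]; simpl; auto.
  destruct l as [|y l]; auto. intros [H1 H2]; split; auto.
Qed.

Lemma chain_app R l1 x l2 :
  chain R (l1 ++ x :: l2) <-> chain R (l1 ++ [x]) /\ chain R (x :: l2).
Proof.
  induction l1 as [|y l1 IH]; simpl; [tauto|].
  destruct l1 as [|z l1]; simpl in *; [tauto|]. rewrite IH. tauto.
Qed.

Lemma chain_app_l R l1 l2 : chain R (l1 ++ l2) -> chain R l1.
Proof.
  induction l1 as [|x l1 IH]; intros H; simpl; auto.
  destruct l1 as [|y l1]; auto. simpl in H. destruct H as [H1 H2]. split; auto.
Qed.

Lemma chain_rev R l : (forall x y, R x y -> R y x) -> chain R l -> chain R (rev l).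
Proof.
  intros Hs; induction l as [|x l IH]; simpl; auto.
  destruct l as [|y l]; simpl; auto.
  intros [H1 H2]. specialize (IH H2). simpl in IH.
  rewrite <- app_assoc. apply chain_app. simpl. auto.
Qed.

Lemma chain_interior R p : chain R p -> chain R (interior p).
Proof.
  unfold interior. destruct p as [|x t]; simpl; auto. intros H. apply chain_tl in H.
  destruct t as [|y t] using rev_ind; simpl; auto.
  rewrite removelast_last. eapply chain_app_l; eauto.
Qed.

Lemma chain_and_tl R (P : V -> Prop) w :
  chain R w -> Forall P (tl w) -> chain (fun y z => R y z /\ P z) w.
Proof.
  induction w as [|x w IH]; simpl; auto.
  destruct w as [|y w]; simpl; auto. intros [H1 H2] Hf. inversion Hf; subst.
  split; [auto|]. apply (IH H2). simpl. auto.
Qed.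

Lemma last_app_cons l1 (a : V) l d : last (l1 ++ a :: l) d = last (a :: l) d.
Proof.
  induction l1 as [|b l1 IH]; auto.
  rewrite <- app_comm_cons, <- IH. destruct l1; reflexivity.
Qed.

Lemma last_indep l (d d' : V) : l <> [] -> last l d = last l d'.
Proof.
  induction l as [|a l IH]; intros H; [congruence|].
  destruct l as [|b l]; auto. apply IH. discriminate.
Qed.

Lemma last_In l (d : V) : l <> [] -> In (last l d) l.
Proof.
  induction l as [|a l IH]; intros H; [congruence|].
  destruct l as [|b l]; simpl; auto. right. apply IH. discriminate.
Qed.

Lemma hd_error_rev l (d : V) : l <> [] -> hd_error (rev l) = Some (last l d).
Proof.
  intros H. destruct (exists_last H) as [m [b ->]].
  rewrite rev_app_distr, last_last. reflexivity.
Qed.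

Lemma last_rev l (x d : V) : hd_error l = Some x -> last (rev l) d = x.
Proof. destruct l as [|a l]; [discriminate|]. intros [= ->]. apply last_last. Qed.

Lemma nonempty_In l : l <> [] -> exists x : V, In x l.
Proof. destruct l as [|x l]; [tauto|]. exists x. left; auto. Qed.

Lemma In_hd_tl w (c y : V) : hd_error w = Some c -> In y w -> y = c \/ In y (tl w).
Proof. destruct w; simpl; intros H; [discriminate|]. injection H as ->. intros [H|H]; auto. Qed.

Lemma NoDup_or_repeat l : NoDup l \/ exists l1 z l2 l3, l = l1 ++ z :: l2 ++ z :: l3.
Proof.
  induction l as [|a l [IH|[l1 [z [l2 [l3 ->]]]]]]; [left; constructor| |].
  - destruct (classic (In a l)) as [Hin|Hnin]; [|left; constructor; auto].
    right. destruct (in_split _ _ Hin) as [l2 [l3 ->]]. exists [], a, l2, l3. reflexivity.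
  - right. exists (a :: l1), z, l2, l3. reflexivity.
Qed.

Lemma split_first (P : V -> Prop) l :
  (exists x, In x l /\ P x) ->
  exists l1 x l2, l = l1 ++ x :: l2 /\ P x /\ Forall (fun y => ~ P y) l1.
Proof.
  induction l as [|a l IH]; intros [x [Hx HP]]; [destruct Hx|].
  destruct (classic (P a)) as [Ha|Ha]; [exists [], a, l; auto|].
  destruct Hx as [->|Hx]; [contradiction|].
  destruct IH as [l1 [y [l2 [-> [H1 H2]]]]]; [eauto|].
  exists (a :: l1), y, l2. auto.
Qed.

Lemma split_last (P : V -> Prop) l :
  (exists x, In x l /\ P x) ->
  exists l1 x l2, l = l1 ++ x :: l2 /\ P x /\ Forall (fun y => ~ P y) l2.
Proof.
  intros [x [Hx HP]].
  destruct (split_first P (rev l)) as [l1 [y [l2 [E [H1 H2]]]]].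
  { exists x. rewrite <- in_rev. auto. }
  exists (rev l2), y, (rev l1). split; [|split; auto; apply Forall_rev; auto].
  rewrite <- (rev_involutive l), E, rev_app_distr. simpl. rewrite <- app_assoc. reflexivity.
Qed.

Definition walk R w (x y : V) : Prop :=
  hd_error w = Some x /\ last w x = y /\ chain R w.

Lemma walk_of_path R p x y : is_path R p x y -> walk R p x y.
Proof. intros [H1 [H2 [H3 H4]]]; repeat split; auto. Qed.

Lemma walk_impl R R' w x y : (forall a b, R a b -> R' a b) -> walk R w x y -> walk R' w x y.
Proof. intros H [H1 [H2 H3]]; repeat split; auto. eapply chain_impl; eauto. Qed.

Lemma path_impl R R' p x y : (forall a b, R a b -> R' a b) -> is_path R p x y -> is_path R' p x y.
Proof. intros H [H1 [H2 [H3 H4]]]. repeat split; auto. eapply chain_impl; eauto. Qed.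

Lemma walk_single R x : walk R [x] x x.
Proof. repeat split. Qed.

Lemma walk_edge R x y : R x y -> walk R [x; y] x y.
Proof. intros H; repeat split; simpl; auto. Qed.

Lemma walk_rev R w x y : (forall a b, R a b -> R b a) -> walk R w x y -> walk R (rev w) y x.
Proof.
  intros Hs [Hh [Hl Hc]].
  assert (Hne : w <> []) by (intros ->; discriminate).
  repeat split.
  - rewrite (hd_error_rev x Hne), Hl. reflexivity.
  - apply last_rev. auto.
  - apply chain_rev; auto.
Qed.

Lemma walk_app R w1 w2 x y z : walk R w1 x y -> walk R w2 y z -> walk R (w1 ++ tl w2) x z.
Proof.
  intros [H1 [H2 H3]] [H4 [H5 H6]].
  assert (Hne : w1 <> []) by (intros ->; discriminate).
  destruct (exists_last Hne) as [m [c ->]]. rewrite last_last in H2. subst c.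
  destruct w2 as [|b t]; [discriminate|]. injection H4 as ->. simpl. rewrite <- app_assoc. simpl.
  repeat split.
  - destruct m; simpl in *; auto.
  - rewrite last_app_cons, <- H5. apply last_indep. discriminate.
  - apply chain_app. auto.
Qed.

Lemma walk_cons R x y w z : R x y -> walk R w y z -> walk R (x :: w) x z.
Proof.
  intros H Hw. pose proof (walk_app (walk_edge R x y H) Hw) as Hw'.
  destruct w as [|a w]; [destruct Hw as [Hh _]; discriminate|].
  destruct Hw as [[= ->] _]. exact Hw'.
Qed.

Lemma walk_to_path R w x y : walk R w x y -> exists p, is_path R p x y /\ incl p w.
Proof.
  remember (length w) as n eqn:En. revert w x y En.
  induction n as [n IH] using (well_founded_induction lt_wf).
  intros w x y En [Hh [Hl Hc]].
  destruct (NoDup_or_repeat w) as [Hd|[l1 [z [l2 [l3 ->]]]]].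
  { exists w. split; [repeat split; auto | apply incl_refl]. }
  assert (Hw' : walk R (l1 ++ z :: l3) x y).
  { rewrite last_app_cons in Hl.
    change (z :: l2 ++ z :: l3) with ((z :: l2) ++ z :: l3) in Hl.
    repeat split.
    - destruct l1; simpl in *; auto.
    - rewrite last_app_cons. rewrite last_app_cons in Hl. auto.
    - apply chain_app in Hc as [Hc1 Hc2].
      change (z :: l2 ++ z :: l3) with ((z :: l2) ++ z :: l3) in Hc2.
      apply chain_app in Hc2. apply chain_app. tauto. }
  assert (Hlt : length (l1 ++ z :: l3) < n)
    by (subst n; rewrite !length_app; simpl; rewrite length_app; simpl; lia).
  destruct (IH _ Hlt _ x y eq_refl Hw') as [p [Hp Hi]].
  exists p. split; auto. intros u Hu. apply Hi in Hu.
  rewrite in_app_iff in *. simpl in *. rewrite in_app_iff. simpl. tauto.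
Qed.

Lemma walk_in_chain R l1 x m y l2 :
  chain R (l1 ++ x :: m ++ y :: l2) -> walk R (x :: m ++ [y]) x y.
Proof.
  intros H. apply chain_app in H as [_ H].
  change (x :: m ++ y :: l2) with ((x :: m) ++ y :: l2) in H.
  apply chain_app in H as [H _].
  repeat split; auto. change (x :: m ++ [y]) with ((x :: m) ++ [y]). apply last_last.
Qed.

Lemma walk_between_in_chain R l x y :
  (forall a b, R a b -> R b a) -> chain R l -> In x l -> In y l ->
  exists w, walk R w x y /\ incl w l.
Proof.
  intros Hs Hc Hx Hy.
  destruct (in_split _ _ Hx) as [l1 [l2 ->]].
  apply in_app_or in Hy. destruct Hy as [Hy|[<-|Hy]].
  - destruct (in_split _ _ Hy) as [m1 [m2 ->]].
    rewrite <- app_assoc in Hc. simpl in Hc.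
    exists (rev (y :: m2 ++ [x])). split.
    + apply walk_rev; auto. eapply walk_in_chain; eauto.
    + intros u Hu. rewrite <- in_rev in Hu. simpl in Hu.
      rewrite !in_app_iff in *. simpl in *. tauto.
  - exists [x]. split; [apply walk_single|]. intros u [<-|[]]. apply in_or_app; simpl; auto.
  - destruct (in_split _ _ Hy) as [m1 [m2 ->]].
    exists (x :: m1 ++ [y]). split; [eapply walk_in_chain; eauto|].
    intros u Hu. simpl in Hu. rewrite !in_app_iff in *. simpl in *. rewrite in_app_iff. simpl. tauto.
Qed.

Lemma walk_refine R R' :
  (forall a b, R a b -> exists w, walk R' w a b) ->
  forall w x y, walk R w x y -> exists w', walk R' w' x y.
Proof.
  intros Hr w. induction w as [|z t IH]; intros x y [Hh [Hl Hc]]; [discriminate|].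
  injection Hh as <-.
  destruct t as [|z' t]; [simpl in Hl; rewrite <- Hl; exists [z]; apply walk_single|].
  destruct Hc as [Hzz' Hc].
  destruct (IH z' y) as [w2 Hw2].
  { repeat split; auto. rewrite <- Hl.
    change (last (z' :: t) z' = last (z' :: t) z). apply last_indep. discriminate. }
  destruct (Hr z z' Hzz') as [w1 Hw1].
  exists (w1 ++ tl w2). eapply walk_app; eauto.
Qed.

Lemma connected_in_chain R l :
  (forall a b, R a b -> R b a) -> chain R l -> connected_in R (fun x => In x l).
Proof.
  intros Hs Hc x y Hx Hy.
  destruct (walk_between_in_chain _ _ _ _ Hs Hc Hx Hy) as [w [Hw Hi]].
  destruct (walk_to_path Hw) as [p [Hp Hi']]. exists p. split; auto.
  apply Forall_forall. auto.
Qed.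

Lemma connected_in_ext R (A B : V -> Prop) :
  (forall x, A x <-> B x) -> connected_in R A -> connected_in R B.
Proof.
  intros He H x y Hx Hy. apply He in Hx, Hy.
  destruct (H x y Hx Hy) as [p [Hp Hf]]. exists p; split; auto.
  eapply Forall_impl; [|exact Hf]. intros a. apply He.
Qed.

Lemma connected_in_union R (A B : V -> Prop) z :
  (forall a b, R a b -> R b a) -> connected_in R A -> connected_in R B -> A z -> B z ->
  connected_in R (fun x => A x \/ B x).
Proof.
  intros Hs HA HB Az Bz.
  assert (Hz : forall x, A x \/ B x -> exists w, walk R w x z /\ Forall (fun u => A u \/ B u) w).
  { intros x [Hx|Hx]; [destruct (HA x z Hx Az) as [p [Hp Hf]] | destruct (HB x z Hx Bz) as [p [Hp Hf]]];
      exists p; (split; [apply walk_of_path; auto | eapply Forall_impl; [|exact Hf]; auto]). }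
  intros x y Hx Hy.
  destruct (Hz x Hx) as [w1 [Hw1 Hf1]], (Hz y Hy) as [w2 [Hw2 Hf2]].
  destruct (walk_to_path (walk_app Hw1 (walk_rev Hs Hw2))) as [p [Hp Hi]].
  exists p. split; auto.
  eapply incl_Forall; [exact Hi|]. apply Forall_app. split; auto.
  apply Forall_rev in Hf2. destruct (rev w2); simpl; auto. inversion Hf2; auto.
Qed.

Lemma path_loop_interior R p a : is_path R p a a -> interior p = [].
Proof.
  intros [Hh [Hl [Hd Hc]]].
  destruct p as [|x [|y t]]; [discriminate|reflexivity|]. injection Hh as ->. exfalso.
  inversion Hd as [|? ? Hx]; subst. apply Hx.
  change (last (y :: t) a = a) in Hl. rewrite <- Hl. apply last_In. discriminate.
Qed.

Lemma path_eq R p a b : is_path R p a b -> a <> b -> p = a :: interior p ++ [b].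
Proof.
  intros [Hh [Hl [Hd Hc]]] Hab.
  destruct p as [|x [|y t]]; [discriminate| simpl in *; congruence |]. injection Hh as ->.
  unfold interior. simpl tl. f_equal.
  change (last (y :: t) a = b) in Hl. rewrite <- Hl.
  apply app_removelast_last. discriminate.
Qed.

Lemma In_interior R p a b y :
  is_path R p a b -> In y (interior p) -> In y p /\ y <> a /\ y <> b.
Proof.
  intros Hp Hy.
  destruct (classic (a = b)) as [<-|Hab].
  { rewrite (path_loop_interior Hp) in Hy. destruct Hy. }
  pose proof (path_eq Hp Hab) as E.
  destruct Hp as [_ [_ [Hd _]]]. rewrite E in Hd |- *.
  inversion Hd as [|? ? Ha Hd']; subst.
  assert (~ In b (interior p)).
  { intro Hb. apply (NoDup_remove_2 _ _ _ Hd'). rewrite app_nil_r. auto. }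
  split; [right; apply in_or_app; auto|].
  split; intros ->; [apply Ha; apply in_or_app|]; auto.
Qed.

Lemma interior_eq (a : V) m b : interior (a :: m ++ [b]) = m.
Proof. unfold interior. simpl. apply removelast_last. Qed.

Lemma interior_rev l : interior (rev l) = rev (interior l).
Proof.
  destruct l as [|a l]; auto.
  destruct l as [|b l] using rev_ind; auto.
  replace (rev (a :: l ++ [b])) with (b :: rev l ++ [a])
    by (simpl; rewrite rev_app_distr; reflexivity).
  rewrite !interior_eq. reflexivity.
Qed.

Lemma incl_interior_prefix (x : V) m c k : incl m (interior (x :: m ++ c :: k)).
Proof.
  unfold interior. simpl. rewrite removelast_app by discriminate.
  intros u Hu. apply in_or_app; auto.
Qed.

Lemma path_rev R p a b : (forall x y, R x y -> R y x) -> is_path R p a b -> is_path R (rev p) b a.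
Proof.
  intros Hs Hp. destruct (walk_rev Hs (walk_of_path Hp)) as [H1 [H2 H3]].
  destruct Hp as [_ [_ [Hd _]]]. repeat split; auto. apply NoDup_rev; auto.
Qed.

Lemma path_prefix R x m c k y :
  is_path R (x :: m ++ c :: k) x y -> is_path R (x :: m ++ [c]) x c.
Proof.
  intros [Hh [Hl [Hd Hc]]]. rewrite app_comm_cons in Hd, Hc |- *. repeat split.
  - apply last_last.
  - change (c :: k) with ([c] ++ k) in Hd. rewrite app_assoc in Hd.
    eapply NoDup_app_remove_r; eauto.
  - apply chain_app in Hc. tauto.
Qed.

Lemma path_interior_ends R p a b :
  is_path R p a b -> a <> b -> interior p <> [] ->
  exists c I, interior p = c :: I /\ R a c /\ R (last (c :: I) c) b /\ chain R (c :: I).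
Proof.
  intros Hp Hab Hne. pose proof (path_eq Hp Hab) as Ep.
  destruct (interior p) as [|c I] eqn:EI; [congruence|].
  assert (Hc : chain R p) by apply Hp.
  exists c, I. split; [reflexivity|]. split; [|split].
  - rewrite Ep in Hc. apply Hc.
  - rewrite (app_removelast_last c (l := c :: I)) in Ep by discriminate.
    rewrite Ep, <- app_assoc, app_comm_cons in Hc. apply chain_app in Hc as [_ Hc]. apply Hc.
  - rewrite <- EI. apply chain_interior. exact Hc.
Qed.

End Walks.

Lemma adj_minus_sym (G : graph) E (x y : G) : adj_minus G E x y -> adj_minus G E y x.
Proof. intros [H1 [H2 H3]]. repeat split; auto. apply adj_sym; auto. Qed.

Lemma adj_minus_adj (G : graph) E (x y : G) : adj_minus G E x y -> adj G x y.
Proof. intros [H _]; auto. Qed.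

Lemma adj_minus_antimono (G : graph) E E' (x y : G) :
  incl E E' -> adj_minus G E' x y -> adj_minus G E x y.
Proof. intros Hi [H1 [H2 H3]]. repeat split; auto. Qed.

Lemma exists_common_list {X Y : Type} (L : list X) (P : X -> list Y -> Prop) :
  (forall x S S', incl S S' -> P x S -> P x S') ->
  (forall x, In x L -> exists S, P x S) -> exists S, forall x, In x L -> P x S.
Proof.
  intros Hm. induction L as [|x L IH]; intros H; [exists []; intros _ []|].
  destruct (H x (or_introl eq_refl)) as [S1 H1].
  destruct IH as [S2 H2]; [intros y Hy; apply H; right; auto|].
  exists (S1 ++ S2). intros y [<-|Hy]; eapply Hm; eauto; intros u Hu; apply in_or_app; auto.
Qed.

Definition separates (G : graph) (A B S : list G) : Prop :=
  forall p a b, In a A -> In b B -> is_path (adj G) p a b -> interior p <> [] ->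
    exists s, In s (interior p) /\ In s S.

Lemma separates_mono (G : graph) (A B S S' : list G) :
  incl S S' -> separates G A B S -> separates G A B S'.
Proof. intros Hi H p a b Ha Hb Hp Hne. destruct (H p a b Ha Hb Hp Hne) as [s [H1 H2]]. eauto. Qed.

Lemma separates_single (G : graph) (u v : G) S :
  separates G [u] [v] S <->
  forall p, is_path (adj G) p u v -> interior p <> [] -> exists s, In s (interior p) /\ In s S.
Proof.
  split; [intros H p Hp; apply (H p u v); simpl; auto|].
  intros H p a b [<-|[]] [<-|[]]. apply H.
Qed.

Section PiSeparators.
Variable G : graph.

Lemma separator_of_not_inf_indep_paths (u v : G) :
  ~ inf_indep_paths G -> u <> v -> exists S, separates G [u] [v] S.
Proof.
  intros HPi Huv. apply NNPP; intro HS.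
  assert (Havoid : forall S : list G, exists p, is_path (adj G) p u v /\ interior p <> [] /\
            forall s, In s (interior p) -> ~ In s S).
  { intros S. apply NNPP; intro H. apply HS. exists S. apply separates_single. intros p Hp Hne.
    apply NNPP; intro Hn. apply H. exists p. split; [auto|split; [auto|]].
    intros s Hs Hs'. apply Hn. eauto. }
  apply choice in Havoid as [F HF].
  (* the n-th path avoids the interiors of all earlier ones *)
  pose (used := fix used (n : nat) : list G :=
          match n with 0 => [] | S n => used n ++ interior (F (used n)) end).
  assert (Hused : forall m k, incl (interior (F (used m))) (used (S m + k))).
  { intros m k. induction k as [|k IH]; intros x Hx.
    - rewrite Nat.add_0_r. apply in_or_app; auto.
    - rewrite Nat.add_succ_r. apply in_or_app. auto. }
  assert (Hlt : forall m n w, m < n -> In w (interior (F (used m))) -> ~ In w (interior (F (used n)))).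
  { intros m n w Hmn H1 H2. apply (proj2 (proj2 (HF (used n))) w H2).
    replace n with (S m + (n - S m)) by lia. apply Hused; auto. }
  assert (Hdisj : forall n m w, n <> m ->
            In w (interior (F (used n))) -> ~ In w (interior (F (used m)))).
  { intros n m w Hnm H1 H2. destruct (Nat.lt_total n m) as [Hl|[Hl|Hl]]; [eapply Hlt; eauto|contradiction|].
    eapply Hlt; eauto. }
  apply HPi. exists u, v, (fun n => F (used n)).
  split; [auto|split; [intros n; apply HF|split; [|exact Hdisj]]].
  intros n m E. apply NNPP; intro Hnm.
  destruct (HF (used n)) as [_ [Hne _]].
  destruct (interior (F (used n))) as [|w l] eqn:Ei; [congruence|].
  apply (Hdisj n m w Hnm); [rewrite Ei; left; auto|]. rewrite <- E, Ei. left; auto.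
Qed.

Lemma not_inf_indep_paths_of_separators :
  (forall u v : G, u <> v -> exists T, separates G [u] [v] T) -> ~ inf_indep_paths G.
Proof.
  intros HS [u [v [P [Huv [HP [Hinj Hdis]]]]]].
  destruct (HS u v Huv) as [T HSS]. rewrite separates_single in HSS.
  assert (Hedge : forall n, interior (P n) = [] -> P n = [u; v]).
  { intros n He. pose proof (path_eq (HP n) Huv) as E. rewrite He in E. exact E. }
  (* at most one of the paths is the edge uv, so one of P (2k), P (2k+1) has inner vertices *)
  assert (Hj : forall k, exists j, interior (P j) <> [] /\ (j = 2 * k \/ j = S (2 * k))).
  { intros k. destruct (interior (P (2 * k))) eqn:E; [|exists (2 * k); rewrite E; split; [discriminate|auto]].
    exists (S (2 * k)). split; auto. intro E2. apply Hedge in E, E2.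
    rewrite <- E2 in E. apply Hinj in E. lia. }
  apply choice in Hj as [j Hj].
  assert (Hf : forall k, exists s, In s (interior (P (j k))) /\ In s T).
  { intros k. apply HSS; [apply HP|apply Hj]. }
  apply choice in Hf as [f Hf].
  assert (Hfi : Injective f).
  { intros x y E. destruct (Nat.eq_dec (j x) (j y)) as [E'|E'].
    - destruct (Hj x) as [_ Hx]. destruct (Hj y) as [_ Hy]. lia.
    - exfalso. apply (Hdis (j x) (j y) (f x) E'); [apply Hf|]. rewrite E. apply Hf. }
  assert (Hi : incl (map f (seq 0 (S (length T)))) T).
  { intros x Hx. apply in_map_iff in Hx as [k [<- _]]. apply Hf. }
  pose proof (NoDup_incl_length (Injective_map_NoDup Hfi (seq_NoDup (S (length T)) 0)) Hi) as H.
  rewrite length_map, length_seq in H. lia.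
Qed.

Lemma not_inf_indep_paths_iff :
  ~ inf_indep_paths G <-> forall u v : G, u <> v -> exists S, separates G [u] [v] S.
Proof.
  split; [intros; apply separator_of_not_inf_indep_paths; auto|].
  apply not_inf_indep_paths_of_separators.
Qed.

Lemma separator_of_disjoint (A B : list G) :
  ~ inf_indep_paths G -> (forall x, In x A -> ~ In x B) -> exists S, separates G A B S.
Proof.
  intros HPi Hd.
  destruct (exists_common_list (list_prod A B) (fun ab S => separates G [fst ab] [snd ab] S))
    as [S HS].
  - intros x S S' Hi H. eapply separates_mono; eauto.
  - intros [a b] Hab. apply in_prod_iff in Hab as [Ha Hb].
    apply separator_of_not_inf_indep_paths; auto. simpl. intros ->. apply (Hd b); auto.
  - exists S. intros p a b Ha Hb. apply (HS (a, b)); simpl; auto. apply in_prod; auto.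
Qed.

End PiSeparators.

Definition linked (G : graph) (A B : list G) (D : G -> Prop) : Prop :=
  forall E : list (G * G), exists p a b, In a A /\ In b B /\
    is_path (adj_minus G E) p a b /\ Forall D (interior p).

Lemma linked_sym (G : graph) A B D : linked G A B D -> linked G B A D.
Proof.
  intros H E. destruct (H E) as [p [a [b [Ha [Hb [Hp Hf]]]]]].
  exists (rev p), b, a. split; [auto|split; [auto|split]].
  - apply path_rev; auto. apply adj_minus_sym.
  - rewrite interior_rev. apply Forall_rev. auto.
Qed.

Lemma linked_mono (G : graph) A B D A' B' D' :
  incl A A' -> incl B B' -> (forall x, D x -> D' x) -> linked G A B D -> linked G A' B' D'.
Proof.
  intros HA HB HD H E. destruct (H E) as [p [a [b [Ha [Hb [Hp Hf]]]]]].
  exists p, a, b. split; [auto|split; [auto|split; [auto|]]]. eapply Forall_impl; eauto.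
Qed.

Lemma linked_cut (G : graph) A B D B' :
  linked G A B D -> incl B B' -> (forall x, In x B' -> ~ In x A) ->
  linked G A B' (fun x => D x /\ ~ In x B').
Proof.
  intros H HB HA E. destruct (H E) as [p [a [b [Ha [Hb [Hp Hf]]]]]].
  destruct (split_first (fun x => In x B') p) as [[|a' m] [c [l2 [Ep [Hc Hm]]]]].
  { exists b. split; auto. destruct Hp as [Hh [Hl _]]. rewrite <- Hl. apply last_In.
    intros ->. discriminate. }
  all: destruct Hp as [Hh Hp']; rewrite Ep in Hh; injection Hh as ->.
  { exfalso. apply (HA _ Hc); auto. }
  rewrite Ep, <- app_comm_cons in Hp', Hf.
  exists (a :: m ++ [c]), a, c. split; [auto|split; [auto|split]].
  - eapply path_prefix. split; [reflexivity|exact Hp'].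
  - rewrite interior_eq. apply Forall_forall. intros y Hy. split.
    + rewrite Forall_forall in Hf. apply Hf, incl_interior_prefix; auto.
    + inversion Hm as [|? ? _ Hm']. rewrite Forall_forall in Hm'. auto.
Qed.

Section Splitting.
Variable G : graph.
Hypothesis HPi : ~ inf_indep_paths G.

Definition first_hit (S : list G) (s : G) (l : list G) :=
  exists l1 l2, l = l1 ++ s :: l2 /\ Forall (fun y => ~ In y S) l1.
Definition last_hit (S : list G) (t : G) (l : list G) :=
  exists l1 l2, l = l1 ++ t :: l2 /\ Forall (fun y => ~ In y S) l2.

(** One pair (s, t) serves for all sets of deleted edges: otherwise deleting the
    union of the finitely many bad sets, one per pair in S x S, defeats every pair. *)
Lemma linked_first_last_hit A B D S :
  (forall x, In x A -> ~ In x B) -> linked G A B D -> separates G A B S ->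
  exists s t, forall E, exists p a b, In a A /\ In b B /\ is_path (adj_minus G E) p a b /\
    Forall D (interior p) /\ first_hit S s (interior p) /\ last_hit S t (interior p).
Proof.
  intros Hd Hg HS. apply NNPP; intro H.
  set (Q := fun (st : G * G) E => exists p a b, In a A /\ In b B /\
     is_path (adj_minus G E) p a b /\ Forall D (interior p) /\
     first_hit S (fst st) (interior p) /\ last_hit S (snd st) (interior p)).
  destruct (exists_common_list (list_prod S S) (fun st E => ~ Q st E)) as [E0 HE0].
  - intros st E E' Hi HnQ [p [a [b [Ha [Hb [Hp Hr]]]]]]. apply HnQ. exists p, a, b.
    split; [auto|split; [auto|split; [|auto]]].
    eapply path_impl; [|exact Hp]. intros x y. apply adj_minus_antimono; auto.
  - intros [s t] _. apply NNPP; intro H'. apply H. exists s, t. intro E.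
    apply NNPP; intro HQ. apply H'. exists E. exact HQ.
  - (* deleting the edges between A and B forces inner vertices, hence a hit in S *)
    destruct (Hg (E0 ++ list_prod A B)) as [p [a [b [Ha [Hb [Hp Hf]]]]]].
    assert (Hab : a <> b) by (intros ->; eapply Hd; eauto).
    assert (Hne : interior p <> []).
    { intro He. pose proof (path_eq Hp Hab) as Ep. rewrite He in Ep.
      destruct Hp as [_ [_ [_ Hc]]]. rewrite Ep in Hc.
      destruct Hc as [[_ [Hn _]] _]. apply Hn. apply in_or_app. right. apply in_prod; auto. }
    destruct (HS p a b Ha Hb) as [s' [Hs1 Hs2]]; auto.
    { eapply path_impl; [|exact Hp]. intros x y. apply adj_minus_adj. }
    destruct (split_first (fun y => In y S) (interior p)) as [l1 [s [l2 [E1 [Hs Hl1]]]]]; [eauto|].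
    destruct (split_last (fun y => In y S) (interior p)) as [l3 [t [l4 [E2 [Ht Hl4]]]]]; [eauto|].
    apply (HE0 (s, t)); [apply in_prod; auto|].
    exists p, a, b. split; [auto|split; [auto|split; [|split; [auto|split]]]].
    + eapply path_impl; [|exact Hp]. intros x y. apply adj_minus_antimono. intros u Hu. apply in_or_app; auto.
    + exists l1, l2. auto.
    + exists l3, l4. auto.
Qed.

Definition side (X : list G) (D : G -> Prop) (S : list G) (x : G) : Prop :=
  D x /\ ~ In x S /\ exists w c, In c X /\ walk (adj G) w c x /\ Forall (fun y => D y /\ ~ In y S) (tl w).

Lemma linked_side (A C : list G) D S s :
  (forall x, D x -> ~ In x A) -> In s C -> (forall x, In x C -> D x) ->
  (forall E, exists p a b, In a A /\ is_path (adj_minus G E) p a b /\ Forall D (interior p) /\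
      first_hit S s (interior p)) ->
  linked G A C (fun x => side A D S x /\ ~ In x C).
Proof.
  intros HDA Hs HC H E. destruct (H E) as [p [a [b [Ha [Hp [Hf [l1 [l2 [Ei Hl1]]]]]]]]].
  assert (Hab : a <> b).
  { intros <-. rewrite (path_loop_interior Hp) in Ei. destruct l1; discriminate. }
  pose proof (path_eq Hp Hab) as Ep. rewrite Ei, <- app_assoc in Ep. simpl in Ep.
  assert (HDl1 : forall z, In z l1 -> D z /\ ~ In z S).
  { intros z Hz. rewrite Forall_forall in Hf, Hl1. split; [apply Hf; rewrite Ei; apply in_or_app|]; auto. }
  assert (Hp1 : is_path (adj_minus G E) (a :: l1 ++ [s]) a s)
    by (rewrite Ep in Hp; eapply path_prefix; eauto).
  destruct (split_first (fun x => In x C) (a :: l1 ++ [s])) as [[|a' m] [c [k2 [Ek [Hc Hm]]]]].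
  { exists s. split; auto. right. apply in_or_app. right. left. auto. }
  { exfalso. injection Ek as <- _. apply (HDA a); auto. }
  injection Ek as <- Ek.
  assert (Hml1 : forall y, In y m -> In y l1 /\ ~ In y C).
  { intros y Hy. inversion Hm as [|? ? _ Hm']. rewrite Forall_forall in Hm'. split; auto.
    assert (Hy' : In y (l1 ++ [s])) by (rewrite Ek; apply in_or_app; auto).
    apply in_app_or in Hy' as [|[<-|[]]]; auto. exfalso. apply (Hm' s); auto. }
  exists (a :: m ++ [c]), a, c. split; [auto|split; [auto|split]].
  - rewrite Ek in Hp1. eapply path_prefix; eauto.
  - rewrite interior_eq. apply Forall_forall. intros y Hy.
    destruct (Hml1 y Hy) as [Hyl1 HyC]. split; [|auto].
    destruct (in_split _ _ Hyl1) as [u1 [u2 Eu]].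
    split; [apply HDl1; auto|]. split; [apply HDl1; auto|].
    exists (a :: u1 ++ [y]), a. split; [auto|split].
    + apply (walk_impl (R := adj_minus G E)); [intros x1 y1; apply adj_minus_adj|].
      destruct Hp as [_ [_ [_ Hc']]]. rewrite Ep, Eu, <- app_assoc in Hc'. simpl in Hc'.
      apply (walk_in_chain _ [] a u1 y (u2 ++ s :: l2 ++ [b])). exact Hc'.
    + simpl. apply Forall_forall. intros z Hz. apply HDl1. rewrite Eu.
      rewrite in_app_iff in *. simpl in *. tauto.
Qed.

(** Two sides meeting at a vertex would give an A–B path avoiding the separator S. *)
Lemma sides_disjoint A B D S :
  (forall x, D x -> ~ In x A /\ ~ In x B) -> (forall x, In x A -> ~ In x B) ->
  separates G A B S -> forall x, side A D S x -> side B D S x -> False.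
Proof.
  intros HD Hd HS x [Dx [Sx [w1 [a [Ha [Hw1 Hf1]]]]]] [_ [_ [w2 [b [Hb [Hw2 Hf2]]]]]].
  set (R' := fun y z => adj G y z /\ (D y \/ D z)).
  assert (HR's : forall y z, R' y z -> R' z y).
  { intros y z [H1 H2]; split; [apply adj_sym; auto| tauto]. }
  assert (Hinside : forall w c, walk (adj G) w c x -> Forall (fun y => D y /\ ~ In y S) (tl w) ->
            walk R' w c x).
  { intros w c [H1 [H2 H3]] Hf. repeat split; auto.
    eapply chain_impl; [|apply chain_and_tl; [exact H3|exact Hf]]. intros y z [H4 [H5 _]]. split; auto. }
  destruct (walk_to_path (walk_app (Hinside _ _ Hw1 Hf1) (walk_rev HR's (Hinside _ _ Hw2 Hf2))))
    as [p [Hp Hi]].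
  assert (Hab : a <> b) by (intros <-; eapply Hd; eauto).
  assert (Hne : interior p <> []).
  { intro He. pose proof (path_eq Hp Hab) as Ep. rewrite He in Ep.
    destruct Hp as [_ [_ [_ Hc]]]. rewrite Ep in Hc. destruct Hc as [[_ [Hda|Hdb]] _].
    - apply (proj1 (HD a Hda)); auto.
    - apply (proj2 (HD b Hdb)); auto. }
  destruct (HS p a b Ha Hb) as [s [Hs1 Hs2]]; auto.
  { eapply path_impl; [|exact Hp]. intros y z [H _]; auto. }
  destruct (In_interior s Hp Hs1) as [Hsp [Hsa Hsb]].
  apply Hi, in_app_or in Hsp as [Hsp|Hsp].
  - destruct (@In_hd_tl _ w1 a s (proj1 Hw1) Hsp) as [E|E]; [contradiction|].
    rewrite Forall_forall in Hf1. apply (proj2 (Hf1 s E)); auto.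
  - destruct (rev w2) as [|r w3] eqn:Er; [destruct Hsp|]. simpl in Hsp.
    assert (Hs2' : In s w2) by (apply in_rev; rewrite Er; right; auto).
    destruct (@In_hd_tl _ w2 b s (proj1 Hw2) Hs2') as [E|E]; [contradiction|].
    rewrite Forall_forall in Hf2. apply (proj2 (Hf2 s E)); auto.
Qed.

Lemma attach_core A C B D1 D2 :
  (forall x, In x C -> ~ In x A) -> (forall x, D1 x -> ~ In x A /\ ~ In x C) ->
  (forall x, D2 x -> ~ In x C) -> (forall x, D1 x -> ~ D2 x) ->
  connected_in (adj G) (fun x => In x C) -> linked G A C D1 -> linked G C B D2 ->
  exists C', incl C C' /\ (forall x, In x C' -> In x C \/ D1 x) /\
    connected_in (adj G) (fun x => In x C') /\ (exists a c, In a A /\ In c C' /\ adj G a c) /\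
    linked G A C' (fun x => D1 x /\ ~ In x C') /\ linked G C' B (fun x => D2 x /\ ~ In x C').
Proof.
  intros HCA HD1 HD2 H12 Hcon Hg1 Hg2.
  destruct (Hg1 []) as [q [a [c [Ha [Hc [Hq Hf]]]]]].
  assert (Hac : a <> c) by (intros ->; eapply HCA; eauto).
  pose proof (path_eq Hq Hac) as Eq.
  (* add to C the inner vertices of one A–C path inside D1 *)
  set (T := interior q ++ [c]).
  assert (HT : forall x, In x (C ++ T) -> In x C \/ D1 x).
  { intros x Hx. unfold T in Hx. rewrite !in_app_iff in Hx. destruct Hx as [|[Hx|[<-|[]]]]; auto.
    right. rewrite Forall_forall in Hf. auto. }
  assert (Hch : chain (adj G) (a :: T)).
  { destruct Hq as [_ [_ [_ Hch]]]. rewrite Eq in Hch. eapply chain_impl; [|exact Hch].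
    intros x y; apply adj_minus_adj. }
  exists (C ++ T). split; [intros x Hx; apply in_or_app; auto|].
  split; [exact HT|]. split; [|split; [|split]].
  - apply (connected_in_ext (A := fun x => In x C \/ In x T)).
    { intros x. rewrite in_app_iff. tauto. }
    apply connected_in_union with (z := c); auto.
    + intros x y; apply adj_sym.
    + apply connected_in_chain; [intros x y; apply adj_sym|]. eapply chain_tl; eauto.
    + unfold T. apply in_or_app; right; left; auto.
  - destruct T as [|h T'] eqn:ET; [unfold T in ET; destruct (interior q); discriminate|].
    exists a, h. split; [auto|split; [apply in_or_app; right; left; auto|apply Hch]].
  - apply linked_cut with (B := C); auto.
    + intros x Hx; apply in_or_app; auto.
    + intros x Hx. destruct (HT x Hx) as [H|H]; [apply HCA|apply HD1]; auto.
  - eapply linked_mono; [ | | | exact Hg2].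
    + intros x Hx; apply in_or_app; auto.
    + apply incl_refl.
    + intros x Hx. split; auto. intro Hin. destruct (HT x Hin); [eapply HD2|eapply H12]; eauto.
Qed.

Lemma linked_core A B D :
  (forall x, In x A -> ~ In x B) -> (forall x, D x -> ~ In x A /\ ~ In x B) -> linked G A B D ->
  exists C D1 D2, C <> [] /\ connected_in (adj G) (fun x => In x C) /\ (forall x, In x C -> D x) /\
    (forall x, D1 x -> D x /\ ~ In x C) /\ (forall x, D2 x -> D x /\ ~ In x C) /\
    (forall x, D1 x -> ~ D2 x) /\ linked G A C D1 /\ linked G C B D2.
Proof.
  intros Hd HD Hg.
  destruct (@separator_of_disjoint G A B HPi Hd) as [S HS].
  destruct (linked_first_last_hit Hd Hg HS) as [s [t Hst]].
  destruct (Hst []) as [p0 [a0 [b0 [Ha0 [Hb0 [Hp0 [Hf0 [[l1 [l2 [Es _]]] [l3 [l4 [Et _]]]]]]]]]]].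
  set (C := interior p0).
  exists C, (fun x => side A D S x /\ ~ In x C), (fun x => side B D S x /\ ~ In x C).
  assert (HCD : forall x, In x C -> D x) by (rewrite Forall_forall in Hf0; auto).
  split; [unfold C; rewrite Es; destruct l1; discriminate|].
  split.
  { apply connected_in_chain; [intros x y; apply adj_sym|]. apply chain_interior.
    destruct Hp0 as [_ [_ [_ Hc]]]. eapply chain_impl; [|exact Hc]. intros x y; apply adj_minus_adj. }
  split; [exact HCD|]. split; [intros x [[Dx _] HC]; auto|].
  split; [intros x [[Dx _] HC]; auto|]. split.
  { intros x [H1 _] [H2 _]. eapply sides_disjoint; eauto. }
  split.
  - apply linked_side with (s := s); auto.
    + intros x Hx; apply HD; auto.
    + unfold C; rewrite Es; apply in_or_app; right; left; auto.
    + intros E. destruct (Hst E) as [p [a [b [Ha [Hb [Hp [Hf [Hs Ht]]]]]]]]. exists p, a, b. auto.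
  - apply linked_sym, linked_side with (s := t); auto.
    + intros x Hx; apply HD; auto.
    + unfold C; rewrite Et; apply in_or_app; right; left; auto.
    + intros E. destruct (Hst E) as [p [a [b [Ha [Hb [Hp [Hf [Hs [l5 [l6 [E6 Hl6]]]]]]]]]]].
      exists (rev p), b, a. split; [auto|split; [|split]].
      * apply path_rev; auto. intros x y; apply adj_minus_sym.
      * rewrite interior_rev. apply Forall_rev. auto.
      * exists (rev l6), (rev l5). rewrite interior_rev, E6, rev_app_distr. simpl.
        rewrite <- app_assoc. split; auto. apply Forall_rev; auto.
Qed.

Record splitting (A B : list G) (D : G -> Prop) (C : list G) (D1 D2 : G -> Prop) : Prop := {
  split_nonempty : C <> [];
  split_connected : connected_in (adj G) (fun x => In x C);
  split_sub : forall x, In x C -> D x;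
  split_adj_left : exists a c, In a A /\ In c C /\ adj G a c;
  split_adj_right : exists c b, In c C /\ In b B /\ adj G c b;
  split_left_sub : forall x, D1 x -> D x /\ ~ In x C;
  split_right_sub : forall x, D2 x -> D x /\ ~ In x C;
  split_disjoint : forall x, D1 x -> ~ D2 x;
  split_linked_left : linked G A C D1;
  split_linked_right : linked G C B D2 }.

Lemma linked_splitting A B D :
  (forall x, In x A -> ~ In x B) -> (forall x, D x -> ~ In x A /\ ~ In x B) -> linked G A B D ->
  exists C D1 D2, splitting A B D C D1 D2.
Proof.
  intros Hd HD Hg.
  destruct (linked_core Hd HD Hg)
    as [C0 [D1 [D2 [Hne [Hcon [HC0D [HD1 [HD2 [H12 [Hg1 Hg2]]]]]]]]]].
  destruct (@attach_core A C0 B D1 D2) as [C1 [Hi1 [HC1 [Hcon1 [Hadj1 [Hg1' Hg2']]]]]]; auto.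
  { intros x Hx Hx'. apply (proj1 (HD x (HC0D x Hx))); auto. }
  { intros x Hx. destruct (HD1 x Hx) as [Dx HC]. split; [apply HD; auto|auto]. }
  { intros x Hx; apply HD2; auto. }
  assert (HC1D : forall x, In x C1 -> D x).
  { intros x Hx. destruct (HC1 x Hx) as [|H]; [auto|apply HD1; auto]. }
  destruct (@attach_core B C1 A (fun x => D2 x /\ ~ In x C1) (fun x => D1 x /\ ~ In x C1))
    as [C2 [Hi2 [HC2 [Hcon2 [Hadj2 [Hg3 Hg4]]]]]];
    try apply linked_sym; auto.
  { intros x Hx Hx'. apply (proj2 (HD x (HC1D x Hx))); auto. }
  { intros x [Hx HC]. split; [apply HD, HD2; auto|auto]. }
  { intros x [_ Hx]; auto. }
  { intros x [H1 _] [H2 _]. eapply H12; eauto. }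
  exists C2, (fun x => (D1 x /\ ~ In x C1) /\ ~ In x C2), (fun x => (D2 x /\ ~ In x C1) /\ ~ In x C2).
  constructor; auto.
  - destruct C0 as [|c0]; [congruence|]. intros E.
    assert (Hc : In c0 C2) by (apply Hi2, Hi1; left; auto). rewrite E in Hc. destruct Hc.
  - intros x Hx. destruct (HC2 x Hx) as [|[H _]]; [apply HC1D; auto|apply (HD2 x H)].
  - destruct Hadj1 as [a [c [Ha [Hc Hac]]]]. exists a, c. auto.
  - destruct Hadj2 as [b [c [Hb [Hc Hbc]]]]. exists c, b. split; [auto|split; [auto|apply adj_sym; auto]].
  - intros x [[H _] Hx]. split; [apply (HD1 x H)|auto].
  - intros x [[H _] Hx]. split; [apply (HD2 x H)|auto].
  - intros x [[H1 _] _] [[H2 _] _]. eapply H12; eauto.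
  - apply linked_sym; auto.
  - apply linked_sym; auto.
Qed.

End Splitting.

Definition vec := (Z * Z)%type.
Definition det (u v : vec) : Z := (fst u * snd v - snd u * fst v)%Z.
Definition vadd (u v : vec) : vec := (fst u + fst v, snd u + snd v)%Z.
Definition vscale (k : Z) (u : vec) : vec := (k * fst u, k * snd u)%Z.
Definition unimodular (u v : vec) : Prop := (det u v = 1 \/ det u v = -1)%Z.

(** Stern–Brocot tree: a node is a list of turns ([true] = right) from the
    root interval (0/1, 1/0); [descend e s] is the interval reached from [e]. *)
Definition mediant (e : vec * vec) : vec := vadd (fst e) (snd e).
Definition sb_step (b : bool) (e : vec * vec) : vec * vec :=
  if b then (mediant e, snd e) else (fst e, mediant e).
Fixpoint descend (e : vec * vec) (s : list bool) : vec * vec :=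
  match s with [] => e | b :: s' => descend (sb_step b e) s' end.
Definition sb_root : vec * vec := ((0, 1), (1, 0))%Z.
Definition sb_node (s : list bool) : vec := mediant (descend sb_root s).

Section SternBrocot.
Local Open Scope Z_scope.

Definition sb_interval (e : vec * vec) : Prop :=
  0 <= fst (fst e) /\ 1 <= snd (fst e) /\ 0 <= fst (snd e) /\ 0 <= snd (snd e) /\
  (snd (snd e) = 0 -> fst (snd e) = 1) /\ det (fst e) (snd e) = -1.

Lemma sb_interval_root : sb_interval sb_root.
Proof. unfold sb_interval, sb_root, det; simpl; lia. Qed.

Lemma sb_interval_step b e : sb_interval e -> sb_interval (sb_step b e).
Proof.
  destruct e as [[l1 l2] [r1 r2]]. unfold sb_interval, sb_step, mediant, det, vadd; destruct b; simpl; lia.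
Qed.

Lemma sb_interval_descend e s : sb_interval e -> sb_interval (descend e s).
Proof. revert e; induction s as [|b s IH]; simpl; auto. intros e H; apply IH, sb_interval_step; auto. Qed.

Lemma sb_interval_at s : sb_interval (descend sb_root s).
Proof. apply sb_interval_descend, sb_interval_root. Qed.

Lemma mediant_pos e : sb_interval e -> 1 <= fst (mediant e) /\ 1 <= snd (mediant e).
Proof. destruct e as [[l1 l2] [r1 r2]]. unfold sb_interval, mediant, det, vadd; simpl. nia. Qed.

Lemma sb_node_pos s : 1 <= fst (sb_node s) /\ 1 <= snd (sb_node s).
Proof. apply mediant_pos, sb_interval_at. Qed.

Lemma descend_app e s t : descend e (s ++ t) = descend (descend e s) t.
Proof. revert e; induction s; simpl; auto. Qed.

Lemma descend_additive (f : vec -> vec) e s :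
  (forall u v, f (vadd u v) = vadd (f u) (f v)) ->
  descend (f (fst e), f (snd e)) s = (f (fst (descend e s)), f (snd (descend e s))).
Proof.
  intros Hf. revert e; induction s as [|b s IH]; intros e; simpl; auto.
  rewrite <- IH. f_equal. destruct b; unfold sb_step, mediant; simpl; rewrite Hf; reflexivity.
Qed.

(** The left and right subtrees of the root are the images of the whole tree
    under the shears (p, q) |-> (p, p + q) and (p, q) |-> (p + q, q), so the
    subtractive Euclidean algorithm finds the node of p/q. *)
Lemma sb_node_onto_bounded n : forall p q, (Z.to_nat (p + q) <= n)%nat -> 1 <= p -> 1 <= q ->
  Z.gcd p q = 1 -> exists s, sb_node s = (p, q).
Proof.
  induction n as [|n IH]; intros p q Hn Hp Hq Hg; [lia|].
  destruct (Z.lt_total p q) as [Hpq|[<-|Hpq]].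
  - destruct (IH p (q - p)) as [s Hs]; try lia; [rewrite Z.gcd_sub_diag_r; auto|].
    exists (false :: s). unfold sb_node in *.
    change (mediant (descend ((fun v => (fst v, fst v + snd v)) (fst sb_root),
                               (fun v => (fst v, fst v + snd v)) (snd sb_root)) s) = (p, q)).
    rewrite descend_additive by (intros [] []; unfold vadd; simpl; f_equal; lia).
    destruct (descend sb_root s) as [[a b] [c d]]. unfold mediant, vadd in *; simpl in *.
    injection Hs; intros; f_equal; lia.
  - rewrite Z.gcd_diag in Hg. exists []. unfold sb_node, mediant, vadd; simpl. f_equal; lia.
  - destruct (IH (p - q) q) as [s Hs]; try lia.
    { rewrite Z.gcd_comm, Z.gcd_sub_diag_r, Z.gcd_comm. auto. }
    exists (true :: s). unfold sb_node in *.
    change (mediant (descend ((fun v => (fst v + snd v, snd v)) (fst sb_root),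
                               (fun v => (fst v + snd v, snd v)) (snd sb_root)) s) = (p, q)).
    rewrite descend_additive by (intros [] []; unfold vadd; simpl; f_equal; lia).
    destruct (descend sb_root s) as [[a b] [c d]]. unfold mediant, vadd in *; simpl in *.
    injection Hs; intros; f_equal; lia.
Qed.

Lemma sb_node_onto p q : 1 <= p -> 1 <= q -> Z.gcd p q = 1 -> exists s, sb_node s = (p, q).
Proof. intros; eapply sb_node_onto_bounded; eauto. Qed.

(** Coordinates of [v] in the basis given by the interval [e]. *)
Definition coord_l (e : vec * vec) (v : vec) : Z := - det v (snd e).
Definition coord_r (e : vec * vec) (v : vec) : Z := - det (fst e) v.

Lemma det_coord (e : vec * vec) v w :
  det v w * det (fst e) (snd e) = coord_l e v * coord_r e w - coord_r e v * coord_l e w.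
Proof. destruct e as [[a b] [c d]], v as [x y], w as [z t]. unfold coord_l, coord_r, det; simpl. ring. Qed.

Lemma coord_l_add e u v : coord_l e (vadd u v) = coord_l e u + coord_l e v.
Proof. destruct e as [[a b] [c d]], u, v. unfold coord_l, det, vadd; simpl. ring. Qed.

Lemma coord_r_add e u v : coord_r e (vadd u v) = coord_r e u + coord_r e v.
Proof. destruct e as [[a b] [c d]], u, v. unfold coord_r, det, vadd; simpl. ring. Qed.

Lemma descend_closed (P : vec -> Prop) e s :
  (forall u v, P u -> P v -> P (vadd u v)) -> P (fst e) -> P (snd e) ->
  P (fst (descend e s)) /\ P (snd (descend e s)).
Proof.
  intros Hc. revert e; induction s as [|b s IH]; intros e H1 H2; simpl; auto.
  apply IH; destruct b; unfold sb_step, mediant; simpl; auto.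
Qed.

Lemma coord_mediant e : sb_interval e -> coord_l e (mediant e) = coord_r e (mediant e).
Proof. destruct e as [[a b] [c d]]. unfold sb_interval, coord_l, coord_r, mediant, det, vadd; simpl. lia. Qed.

Lemma coord_subtree b e s : sb_interval e ->
  let m := mediant (descend (sb_step b e) s) in
  if b then coord_l e m < coord_r e m else coord_r e m < coord_l e m.
Proof.
  intros He m.
  set (P := fun v => if b then coord_l e v <= coord_r e v /\ 0 <= coord_l e v
                     else coord_r e v <= coord_l e v /\ 0 <= coord_r e v).
  assert (HP : P (fst (descend (sb_step b e) s)) /\ P (snd (descend (sb_step b e) s))).
  { apply descend_closed; unfold P.
    - intros u v; destruct b; rewrite coord_l_add, coord_r_add; lia.
    - destruct e as [[a1 a2] [c1 c2]], b;
        unfold sb_interval, coord_l, coord_r, sb_step, mediant, det, vadd in *; simpl in *; lia.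
    - destruct e as [[a1 a2] [c1 c2]], b;
        unfold sb_interval, coord_l, coord_r, sb_step, mediant, det, vadd in *; simpl in *; lia. }
  pose proof (sb_interval_descend s (sb_interval_step b He)) as Hi.
  unfold m, P in *. destruct (descend (sb_step b e) s) as [L R]. simpl in HP.
  pose proof (det_coord e L R) as Hd.
  destruct Hi as [_ [_ [_ [_ [_ Hi]]]]], He as [_ [_ [_ [_ [_ He]]]]]. simpl in Hi.
  rewrite Hi, He in Hd. unfold mediant. simpl. rewrite coord_l_add, coord_r_add.
  destruct b; nia.
Qed.

Lemma descend_mediant_inj s1 : forall e s2, sb_interval e ->
  mediant (descend e s1) = mediant (descend e s2) -> s1 = s2.
Proof.
  induction s1 as [|b1 s1 IH]; intros e [|b2 s2] He Hm; simpl in Hm; [reflexivity| | |].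
  - exfalso. pose proof (coord_mediant He) as H0.
    pose proof (coord_subtree b2 s2 He) as H. cbv zeta in H. rewrite <- Hm in H. destruct b2; lia.
  - exfalso. pose proof (coord_mediant He) as H0.
    pose proof (coord_subtree b1 s1 He) as H. cbv zeta in H. rewrite Hm in H. destruct b1; lia.
  - destruct (Bool.bool_dec b1 b2) as [<-|Hb].
    + f_equal. eapply IH; [apply sb_interval_step|]; eauto.
    + exfalso. pose proof (coord_subtree b1 s1 He) as H1. pose proof (coord_subtree b2 s2 He) as H2.
      cbv zeta in H1, H2. rewrite Hm in H1. destruct b1, b2; congruence || lia.
Qed.

Lemma sb_node_inj s1 s2 : sb_node s1 = sb_node s2 -> s1 = s2.
Proof. apply descend_mediant_inj, sb_interval_root. Qed.

Lemma descend_repeat_right L R k :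
  descend (L, R) (repeat true k) = (vadd L (vscale (Z.of_nat k) R), R).
Proof.
  revert L; induction k as [|k IH]; intros L.
  - destruct L, R; unfold vadd, vscale; cbn; f_equal; f_equal; lia.
  - change (descend (vadd L R, R) (repeat true k) = (vadd L (vscale (Z.of_nat (S k)) R), R)).
    rewrite IH. destruct L, R; unfold vadd, vscale; cbn [fst snd]; rewrite Nat2Z.inj_succ.
    f_equal; f_equal; ring.
Qed.

Lemma descend_repeat_left L R k :
  descend (L, R) (repeat false k) = (L, vadd R (vscale (Z.of_nat k) L)).
Proof.
  revert R; induction k as [|k IH]; intros R.
  - destruct L, R; unfold vadd, vscale; cbn; f_equal; f_equal; lia.
  - change (descend (L, vadd L R) (repeat false k) = (L, vadd R (vscale (Z.of_nat (S k)) L))).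
    rewrite IH. destruct L, R; unfold vadd, vscale; cbn [fst snd]; rewrite Nat2Z.inj_succ.
    f_equal; f_equal; ring.
Qed.

Lemma unimodular_mediant L R v : sb_interval (L, R) -> snd v >= 0 -> v <> (0, 0) ->
  unimodular (vadd L R) v ->
  (exists k : nat, v = vadd L (vscale (Z.of_nat k) (vadd L R))) \/
  (exists k : nat, v = vadd R (vscale (Z.of_nat k) (vadd L R))) \/ v = (-1, 0).
Proof.
  destruct L as [a b], R as [c d], v as [x y]. unfold sb_interval, unimodular, det, vadd, vscale; simpl.
  intros [Ha [Hb [Hc [Hd [HR Hdet]]]]] Hy Hv Hadj.
  set (al := - (x * d - y * c)). set (be := - (a * y - b * x)).
  assert (Ex : x = al * a + be * c) by (unfold al, be; nia).
  assert (Ey : y = al * b + be * d) by (unfold al, be; nia).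
  assert (Hab : al - be = 1 \/ al - be = -1) by (unfold al, be in *; nia).
  clearbody al be. subst x y.
  destruct (Z_le_gt_dec 0 al) as [H1|H1]; destruct (Z_le_gt_dec 0 be) as [H2|H2].
  - destruct Hab as [Hab|Hab].
    + left. exists (Z.to_nat be). rewrite Z2Nat.id by lia. f_equal; nia.
    + right; left. exists (Z.to_nat al). rewrite Z2Nat.id by lia. f_equal; nia.
  - assert (al = 0 /\ be = -1) as [-> ->] by lia.
    right; right. assert (d = 0) by nia. subst d. specialize (HR eq_refl). subst c. f_equal; lia.
  - exfalso. assert (al = -1 /\ be = 0) as [-> ->] by lia. lia.
  - exfalso. nia.
Qed.

Lemma sb_node_neighbour s0 v : snd v >= 0 -> v <> (0, 0) -> unimodular (sb_node s0) v ->
  v = fst (descend sb_root s0) \/ v = snd (descend sb_root s0) \/ v = (-1, 0) \/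
  (exists s, sb_node s = v /\ snd (descend sb_root s) = sb_node s0) \/
  (exists s, sb_node s = v /\ fst (descend sb_root s) = sb_node s0).
Proof.
  intros Hv Hne Hd. pose proof (sb_interval_at s0) as Hi. unfold sb_node in *.
  destruct (descend sb_root s0) as [L R] eqn:E. unfold mediant in Hd. simpl in Hd |- *.
  destruct (unimodular_mediant Hi Hv Hne Hd) as [[k Hk]|[[k Hk]|Hk]]; [| |tauto]; subst v.
  all: destruct k as [|k];
    [left + (right; left); destruct L, R; unfold vadd, vscale; simpl; f_equal; lia|].
  - right; right; right; left. exists (s0 ++ false :: repeat true k).
    rewrite descend_app, E. cbn [descend sb_step fst snd]. rewrite descend_repeat_right, Nat2Z.inj_succ.
    unfold mediant. cbn [fst snd]. split; [|reflexivity].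
    destruct L as [a b], R as [c d]. unfold vadd, vscale; cbn [fst snd]. f_equal; ring.
  - right; right; right; right. exists (s0 ++ true :: repeat false k).
    rewrite descend_app, E. cbn [descend sb_step fst snd]. rewrite descend_repeat_left, Nat2Z.inj_succ.
    unfold mediant. cbn [fst snd]. split; [|reflexivity].
    destruct L as [a b], R as [c d]. unfold vadd, vscale; cbn [fst snd]. f_equal; ring.
Qed.

End SternBrocot.

Definition reduced (p : vec) : Prop :=
  Z.gcd (fst p) (snd p) = 1%Z /\ ((0 < snd p)%Z \/ (snd p = 0%Z /\ fst p = 1%Z)).

(** The reflection x |-> -x of the projective line, on reduced representatives. *)
Definition mirror (v : vec) : vec := if Z.eqb (snd v) 0 then v else (- fst v, snd v)%Z.
Definition orient (b : bool) (v : vec) : vec := if b then v else mirror v.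

Section FareyVectors.
Local Open Scope Z_scope.

Lemma farey_reduced (w : farey_vert) : reduced (proj1_sig w).
Proof. exact (proj2_sig w). Qed.

Lemma farey_vert_inj (a b : farey_vert) : proj1_sig a = proj1_sig b -> a = b.
Proof. destruct a as [p Hp], b as [q Hq]. simpl. intros ->. f_equal. apply proof_irrelevance. Qed.

Lemma farey_adj_unimodular (a b : farey_vert) :
  farey_adj a b <-> unimodular (proj1_sig a) (proj1_sig b).
Proof. destruct a as [[x y] Ha], b as [[z t] Hb]. unfold farey_adj, unimodular, det. simpl. tauto. Qed.

Lemma det_anti u v : det v u = - det u v.
Proof. destruct u, v; unfold det; simpl; ring. Qed.

Lemma unimodular_sym u v : unimodular u v -> unimodular v u.
Proof. unfold unimodular. rewrite det_anti. lia. Qed.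

Lemma orient_involutive b v : orient b (orient b v) = v.
Proof.
  destruct b, v as [p q]; unfold orient, mirror; simpl; auto.
  destruct (Z.eqb_spec q 0) as [->|Hq]; simpl; auto.
  apply Z.eqb_neq in Hq. rewrite Hq. f_equal. lia.
Qed.

Lemma det_orient b u v : det (orient b u) (orient b v) = det u v \/ det (orient b u) (orient b v) = - det u v.
Proof.
  destruct b; [auto|]. destruct u as [p q], v as [r s]. unfold orient, mirror, det; simpl.
  destruct (Z.eqb_spec q 0) as [->|Hq], (Z.eqb_spec s 0) as [->|Hs];
    simpl; first [left; ring | right; ring].
Qed.

Lemma unimodular_orient b u v : unimodular (orient b u) (orient b v) <-> unimodular u v.
Proof. unfold unimodular. destruct (det_orient b u v) as [-> | ->]; lia. Qed.

Lemma snd_orient b v : snd (orient b v) = snd v.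
Proof. destruct b; unfold orient, mirror; auto. destruct (Z.eqb (snd v) 0); auto. Qed.

Lemma orient_sb_node b s :
  1 <= snd (orient b (sb_node s)) /\
  (if b then 1 <= fst (orient b (sb_node s)) else fst (orient b (sb_node s)) <= -1).
Proof.
  pose proof (sb_node_pos s) as [H1 H2]. destruct (sb_node s) as [p q]. simpl in *.
  destruct b; unfold orient, mirror; simpl; [lia|].
  destruct (Z.eqb_spec q 0); simpl; lia.
Qed.

Lemma orient_sb_node_inj b b' s s' : orient b (sb_node s) = orient b' (sb_node s') -> b = b' /\ s = s'.
Proof.
  intros E.
  assert (Hb : b = b').
  { pose proof (orient_sb_node b s). pose proof (orient_sb_node b' s'). rewrite E in *.
    destruct b, b'; auto; lia. }
  subst b'. split; [reflexivity|]. apply sb_node_inj.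
  rewrite <- (orient_involutive b (sb_node s)), E. apply orient_involutive.
Qed.

Lemma reduced_cases w : reduced w ->
  w = (0, 1) \/ w = (1, 0) \/ exists b s, orient b (sb_node s) = w.
Proof.
  destruct w as [p q]. intros [Hg Hq]; simpl in Hg, Hq. destruct Hq as [Hq|[-> ->]]; [|tauto].
  destruct (Z.lt_total p 0) as [Hp|[->|Hp]].
  - right; right. destruct (@sb_node_onto (- p) q) as [s Hs]; try lia; [rewrite Z.gcd_opp_l; auto|].
    exists false, s. unfold orient, mirror. rewrite Hs. simpl.
    destruct (Z.eqb_spec q 0); [lia|]. f_equal. lia.
  - left. rewrite Z.gcd_0_l in Hg. f_equal. lia.
  - right; right. destruct (@sb_node_onto p q) as [s Hs]; try lia. exists true, s. exact Hs.
Qed.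

Lemma reduced_upper w : reduced w -> snd w >= 0 /\ w <> (0, 0) /\ w <> (-1, 0).
Proof.
  destruct w as [p q]. intros [_ H]; simpl in H.
  destruct H as [H|[-> ->]]; simpl; (split; [lia|split; intros [= ? ?]; lia]).
Qed.

End FareyVectors.

Section FareyModel.
Variable G : graph.
Hypothesis HPi : ~ inf_indep_paths G.

Record state := State { st_left : list G; st_right : list G; st_region : G -> Prop }.

Definition admissible (s : state) : Prop :=
  (forall x, In x (st_left s) -> ~ In x (st_right s)) /\
  (forall x, st_region s x -> ~ In x (st_left s) /\ ~ In x (st_right s)) /\
  linked G (st_left s) (st_right s) (st_region s).

Lemma state_splitting_exists (s : state) : exists o : list G * (G -> Prop) * (G -> Prop),
  admissible s -> splitting G (st_left s) (st_right s) (st_region s) (fst (fst o)) (snd (fst o)) (snd o).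
Proof.
  destruct (classic (admissible s)) as [[H1 [H2 H3]]|H].
  - destruct (linked_splitting HPi H1 H2 H3) as [C [D1 [D2 Hc]]]. exists (C, D1, D2). auto.
  - exists ([], fun _ => False, fun _ => False). intro; contradiction.
Qed.

Definition state_splitting (s : state) :=
  proj1_sig (constructive_indefinite_description _ (state_splitting_exists s)).
Definition core (s : state) : list G := fst (fst (state_splitting s)).
Definition left_part (s : state) : G -> Prop := snd (fst (state_splitting s)).
Definition right_part (s : state) : G -> Prop := snd (state_splitting s).

Lemma splitting_core (s : state) : admissible s ->
  splitting G (st_left s) (st_right s) (st_region s) (core s) (left_part s) (right_part s).
Proof. exact (proj2_sig (constructive_indefinite_description _ (state_splitting_exists s))). Qed.

(** The splitting tree follows the Stern–Brocot tree: the core of a state is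
    the branch set of the mediant of its interval. *)
Definition child (b : bool) (s : state) : state :=
  if b then State (core s) (st_right s) (right_part s) else State (st_left s) (core s) (left_part s).

Fixpoint state_at (s : state) (l : list bool) : state :=
  match l with [] => s | b :: l' => state_at (child b s) l' end.

Lemma admissible_child b s : admissible s -> admissible (child b s).
Proof.
  intros Hs. destruct (splitting_core Hs) as [_ _ HCD _ _ H1 H2 _ Hg1 Hg2].
  destruct Hs as [Hd [HD Hg]].
  destruct b; unfold admissible, child; simpl; (split; [|split; auto]).
  - intros x Hx Hx'. apply (proj2 (HD x (HCD x Hx))); auto.
  - intros x Hx. destruct (H2 x Hx) as [Dx Cx]. split; auto. apply HD; auto.
  - intros x Hx Hx'. apply (proj1 (HD x (HCD x Hx'))); auto.
  - intros x Hx. destruct (H1 x Hx) as [Dx Cx]. split; auto. apply HD; auto.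
Qed.

Lemma admissible_state_at l : forall s, admissible s -> admissible (state_at s l).
Proof. induction l as [|b l IH]; simpl; auto. intros s Hs. apply IH, admissible_child; auto. Qed.

Lemma region_child b s x : admissible s -> st_region (child b s) x -> st_region s x /\ ~ In x (core s).
Proof. intros Hs. destruct (splitting_core Hs) as [_ _ _ _ _ H1 H2 _ _ _]. destruct b; simpl; auto. Qed.

Lemma core_state_at_region l : forall s x, admissible s -> In x (core (state_at s l)) -> st_region s x.
Proof.
  induction l as [|b l IH]; simpl; intros s x Hs Hx.
  - apply (splitting_core Hs); auto.
  - apply (region_child b x Hs). apply IH; auto. apply admissible_child; auto.
Qed.

Lemma core_state_at_disjoint l1 : forall s l2 x, admissible s -> l1 <> l2 ->
  In x (core (state_at s l1)) -> In x (core (state_at s l2)) -> False.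
Proof.
  induction l1 as [|b1 l1 IH]; intros s [|b2 l2] x Hs Hne H1 H2; simpl in *; [congruence| | |].
  - apply core_state_at_region, region_child in H2; try apply admissible_child; tauto.
  - apply core_state_at_region, region_child in H1; try apply admissible_child; tauto.
  - destruct (Bool.bool_dec b1 b2) as [Eb|E]; [subst b2|].
    + apply (IH (child b1 s) l2 x); auto; [apply admissible_child; auto|congruence].
    + apply core_state_at_region in H1, H2; try apply admissible_child; auto.
      destruct (splitting_core Hs) as [_ _ _ _ _ _ _ H12 _ _].
      destruct b1, b2; try congruence; simpl in *; eapply H12; eauto.
Qed.

Lemma state_at_ends (f : vec -> G -> Prop) l : forall s e,
  (forall g, In g (st_left s) -> f (fst e) g) -> (forall g, In g (st_right s) -> f (snd e) g) ->
  (forall l' g, In g (core (state_at s l')) -> f (mediant (descend e l')) g) ->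
  (forall g, In g (st_left (state_at s l)) -> f (fst (descend e l)) g) /\
  (forall g, In g (st_right (state_at s l)) -> f (snd (descend e l)) g).
Proof.
  induction l as [|b l IH]; intros s e HA HB HC; simpl; auto.
  apply IH; [destruct b; simpl; auto; apply (HC [])..|].
  intros l' g Hg. apply (HC (b :: l') g Hg).
Qed.

Variables (X Y : list G) (D : bool -> G -> Prop).
Hypothesis root_admissible : forall b, admissible (State X Y (D b)).
Hypothesis regions_disjoint : forall x, D true x -> ~ D false x.
Hypothesis X_connected : connected_in (adj G) (fun x => In x X).
Hypothesis Y_connected : connected_in (adj G) (fun x => In x Y).
Hypothesis X_nonempty : X <> [].
Hypothesis Y_nonempty : Y <> [].
Hypothesis XY_adjacent : exists x y, In x X /\ In y Y /\ adj G x y.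

Definition tree (b : bool) (l : list bool) : state := state_at (State X Y (D b)) l.

(** The branch set of the Farey vertex [w]: [X] for 0/1, [Y] for 1/0, and
    the core at the Stern–Brocot node of |w| in the tree of the sign of [w]. *)
Definition branch (w : vec) (g : G) : Prop :=
  (w = (0, 1)%Z /\ In g X) \/ (w = (1, 0)%Z /\ In g Y) \/
  exists b l, orient b (sb_node l) = w /\ In g (core (tree b l)).

Lemma admissible_tree b l : admissible (tree b l).
Proof. apply admissible_state_at, root_admissible. Qed.

Lemma core_tree_region b l g : In g (core (tree b l)) -> D b g.
Proof. apply (core_state_at_region l), root_admissible. Qed.

Lemma branch_tree_ends b l :
  (forall g, In g (st_left (tree b l)) -> branch (orient b (fst (descend sb_root l))) g) /\
  (forall g, In g (st_right (tree b l)) -> branch (orient b (snd (descend sb_root l))) g).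
Proof.
  apply (state_at_ends (fun v => branch (orient b v))).
  - intros g Hg. left. destruct b; auto.
  - intros g Hg. right; left. destruct b; auto.
  - intros l' g Hg. right; right. exists b, l'. auto.
Qed.

Lemma branch_node_iff b l g : branch (orient b (sb_node l)) g <-> In g (core (tree b l)).
Proof.
  split; [|intros; right; right; eauto].
  pose proof (orient_sb_node b l) as Hpos.
  intros [[E _]|[[E _]|[b' [l' [E Hg]]]]]; [rewrite E in Hpos; destruct b; simpl in Hpos; lia..|].
  destruct (orient_sb_node_inj _ _ _ _ E) as [-> ->]. exact Hg.
Qed.

Lemma branch_X_iff g : branch (0, 1)%Z g <-> In g X.
Proof.
  split; [|left; auto].
  intros [[_ H]|[[E _]|[b [l [E _]]]]]; [auto|discriminate|].
  pose proof (orient_sb_node b l) as Hpos. rewrite E in Hpos. destruct b; simpl in Hpos; lia.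
Qed.

Lemma branch_Y_iff g : branch (1, 0)%Z g <-> In g Y.
Proof.
  split; [|right; left; auto].
  intros [[E _]|[[_ H]|[b [l [E _]]]]]; [discriminate|auto|].
  pose proof (orient_sb_node b l) as Hpos. rewrite E in Hpos. simpl in Hpos. lia.
Qed.

Lemma branch_functional w w' g : branch w g -> branch w' g -> w = w'.
Proof.
  assert (HXY : In g X -> ~ In g Y) by apply (root_admissible true).
  assert (HDX : forall b, D b g -> ~ In g X /\ ~ In g Y) by (intros b; apply (root_admissible b)).
  intros [[-> H1]|[[-> H1]|[b1 [l1 [<- H1]]]]] [[-> H2]|[[-> H2]|[b2 [l2 [<- H2]]]]];
    auto; try (exfalso; first [exact (HXY H1 H2) | exact (HXY H2 H1)]);
    try (apply core_tree_region in H1; exfalso; destruct (HDX _ H1); auto; fail);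
    try (apply core_tree_region in H2; exfalso; destruct (HDX _ H2); auto; fail).
  destruct (Bool.bool_dec b1 b2) as [Eb|Hb]; [subst b2|].
  - destruct (list_eq_dec Bool.bool_dec l1 l2) as [El|Hl]; [subst l2; reflexivity|].
    exfalso. exact (@core_state_at_disjoint l1 _ l2 g (root_admissible b1) Hl H1 H2).
  - apply core_tree_region in H1, H2. exfalso.
    destruct b1, b2; try congruence; eapply regions_disjoint; eauto.
Qed.

Lemma branch_nonempty w : reduced w -> exists g, branch w g.
Proof.
  intros Hw. destruct (reduced_cases Hw) as [->|[->|[b [l <-]]]].
  - destruct (nonempty_In X_nonempty) as [g Hg]. exists g. apply branch_X_iff. auto.
  - destruct (nonempty_In Y_nonempty) as [g Hg]. exists g. apply branch_Y_iff. auto.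
  - destruct (nonempty_In (split_nonempty (splitting_core (admissible_tree b l)))) as [g Hg].
    exists g. apply branch_node_iff. auto.
Qed.

Lemma branch_connected w : reduced w -> connected_in (adj G) (branch w).
Proof.
  intros Hw. destruct (reduced_cases Hw) as [->|[->|[b [l <-]]]].
  - apply (connected_in_ext (A := fun g => In g X)); [intros g; rewrite branch_X_iff; tauto|auto].
  - apply (connected_in_ext (A := fun g => In g Y)); [intros g; rewrite branch_Y_iff; tauto|auto].
  - apply (connected_in_ext (A := fun g => In g (core (tree b l)))).
    + intros g. rewrite branch_node_iff. tauto.
    + apply (split_connected (splitting_core (admissible_tree b l))).
Qed.

Lemma branch_edge_node b l w' : reduced w' -> unimodular (orient b (sb_node l)) w' ->
  exists g g', branch (orient b (sb_node l)) g /\ branch w' g' /\ adj G g g'.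
Proof.
  intros Hw' Hd. set (v := orient b w').
  assert (Ew' : w' = orient b v) by (symmetry; apply orient_involutive).
  destruct (reduced_upper Hw') as [H1 [H2 H3]].
  assert (Hv : unimodular (sb_node l) v) by (rewrite <- (unimodular_orient b), <- Ew'; auto).
  destruct (@sb_node_neighbour l v) as [E|[E|[E|[[l' [Em Es]]|[l' [Em Es]]]]]]; unfold v in *.
  { rewrite snd_orient. auto. }
  { intros E. apply H2. rewrite Ew', E. destruct b; reflexivity. }
  { exact Hv. }
  - destruct (splitting_core (admissible_tree b l)) as [_ _ _ [a [c [Ha [Hc Hac]]]] _ _ _ _ _ _].
    exists c, a. split; [apply branch_node_iff; auto|]. split; [|apply adj_sym; auto].
    rewrite Ew', E. apply (branch_tree_ends b l); auto.
  - destruct (splitting_core (admissible_tree b l)) as [_ _ _ _ [c [a [Hc [Ha Hca]]]] _ _ _ _ _].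
    exists c, a. split; [apply branch_node_iff; auto|]. split; [|auto].
    rewrite Ew', E. apply (branch_tree_ends b l); auto.
  - exfalso. apply H3. rewrite Ew', E. destruct b; reflexivity.
  - destruct (splitting_core (admissible_tree b l')) as [_ _ _ _ [c [a [Hc [Ha Hca]]]] _ _ _ _ _].
    exists a, c. split; [|split; [|apply adj_sym; auto]].
    + rewrite <- Es. apply (branch_tree_ends b l'); auto.
    + rewrite Ew', <- Em. apply branch_node_iff. auto.
  - destruct (splitting_core (admissible_tree b l')) as [_ _ _ [a [c [Ha [Hc Hac]]]] _ _ _ _ _ _].
    exists a, c. split; [|split; [|auto]].
    + rewrite <- Es. apply (branch_tree_ends b l'); auto.
    + rewrite Ew', <- Em. apply branch_node_iff. auto.
Qed.

Lemma branch_edge w w' : reduced w -> reduced w' -> unimodular w w' ->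
  exists g g', branch w g /\ branch w' g' /\ adj G g g'.
Proof.
  intros Hw Hw' Hd.
  destruct (reduced_cases Hw) as [->|[->|[b [l <-]]]]; [| |apply branch_edge_node; auto];
  (destruct (reduced_cases Hw') as [->|[->|[b' [l' <-]]]];
    [| | destruct (branch_edge_node b' l' Hw (unimodular_sym Hd)) as [g [g' [H1 [H2 H3]]]];
         exists g', g; split; [|split]; auto; apply adj_sym; auto]);
  unfold unimodular, det in Hd; simpl in Hd; try lia;
  destruct XY_adjacent as [x [y [Hx [Hy Hxy]]]].
  - exists x, y. rewrite branch_X_iff, branch_Y_iff. auto.
  - exists y, x. rewrite branch_X_iff, branch_Y_iff. split; [|split]; auto. apply adj_sym; auto.
Qed.

Lemma farey_minor_of_model : minor Farey G.
Proof.
  exists (fun h g => branch (proj1_sig h) g). split; [|split; [|split]].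
  - intros h. apply branch_nonempty, farey_reduced.
  - intros h h' g Hne H1 H2. apply Hne, farey_vert_inj. eapply branch_functional; eauto.
  - intros h. apply branch_connected, farey_reduced.
  - intros h h' Hadj. apply branch_edge; try apply farey_reduced. apply farey_adj_unimodular, Hadj.
Qed.

End FareyModel.

Definition vneg (v : vec) : vec := (- fst v, - snd v)%Z.

(** [coord_prod X Y w] is the product of the coordinates of [w] in the basis
    (X, Y), up to the square of [det X Y]. *)
Definition coord_prod (X Y w : vec) : Z := (det X Y * det w Y * (det X Y * det X w))%Z.

Definition represents (w : farey_vert) (X : vec) : Prop := proj1_sig w = X \/ proj1_sig w = vneg X.

Section FareySeparators.
Local Open Scope Z_scope.

Lemma coord_prod_edge X Y w w' : unimodular X Y -> unimodular w w' ->
  ~ (coord_prod X Y w < 0 /\ coord_prod X Y w' > 0).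
Proof.
  unfold coord_prod, unimodular. intros HXY Hw [H1 H2].
  assert (Key : det X Y * det w Y * (det X Y * det X w') - det X Y * det X w * (det X Y * det w' Y)
                = det X Y * det X Y * det X Y * det w w')
    by (destruct X, Y, w, w'; unfold det; simpl; ring).
  set (d := det X Y) in *.
  set (al := d * det w Y) in *. set (be := d * det X w) in *.
  set (al' := d * det w' Y) in *. set (be' := d * det X w') in *.
  assert (Hk : al * be' - be * al' = 1 \/ al * be' - be * al' = -1)
    by (rewrite Key; destruct HXY as [E|E], Hw as [-> | ->]; rewrite E; lia).
  clearbody al be al' be'. clear Key.
  destruct (Z_lt_le_dec al 0), (Z_lt_le_dec al' 0); nia.
Qed.

Lemma gcd_unimodular X Y : unimodular X Y -> Z.gcd (fst X) (snd X) = 1.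
Proof.
  destruct X as [x1 x2], Y as [y1 y2]. unfold unimodular, det; simpl.
  intros [E|E]; apply Z.bezout_1_gcd; [exists y2, (- y1)|exists (- y2), y1]; lia.
Qed.

Lemma det_zero_associated u v : Z.gcd (fst u) (snd u) = 1 -> Z.gcd (fst v) (snd v) = 1 ->
  det u v = 0 -> u = v \/ u = vneg v.
Proof.
  destruct u as [a b], v as [c d]. unfold det, vneg; simpl. intros Hgu Hgv H.
  destruct (Z.gcd_bezout a b 1 Hgu) as [x [y Hxy]].
  set (t := x * c + y * d).
  assert (Ec : c = t * a).
  { unfold t. transitivity (c * (x * a + y * b)); [rewrite Hxy; ring|].
    replace (c * (x * a + y * b)) with (x * c * a + y * (b * c)) by ring.
    replace (b * c) with (a * d) by lia. ring. }
  assert (Ed : d = t * b).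
  { unfold t. transitivity (d * (x * a + y * b)); [rewrite Hxy; ring|].
    replace (d * (x * a + y * b)) with (x * (a * d) + y * d * b) by ring.
    replace (a * d) with (b * c) by lia. ring. }
  assert (Ht : (t | 1)) by (rewrite <- Hgv; apply Z.gcd_greatest; [exists a | exists b]; lia).
  apply Z.divide_1_r in Ht as [-> | ->]; [left|right]; f_equal; lia.
Qed.

Lemma reduced_not_vneg a b : reduced a -> reduced b -> a <> vneg b.
Proof.
  destruct a as [a1 a2], b as [b1 b2]. unfold reduced, vneg; simpl. intros [_ Ha] [_ Hb] [= -> ->]. lia.
Qed.

Lemma represents_unique w x X : represents x X -> represents w X -> w = x.
Proof.
  intros Hx Hw. apply farey_vert_inj.
  assert (NN : vneg (vneg X) = X) by (destruct X; unfold vneg; simpl; f_equal; ring).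
  destruct Hx as [Hx|Hx], Hw as [Hw|Hw]; try congruence; exfalso.
  - apply (reduced_not_vneg (farey_reduced w) (farey_reduced x)). rewrite Hw, Hx. reflexivity.
  - apply (reduced_not_vneg (farey_reduced x) (farey_reduced w)). rewrite Hw, Hx. reflexivity.
Qed.

Lemma not_represents (w u : farey_vert) : w <> u -> ~ represents w (proj1_sig u).
Proof.
  intros Hne [E|E]; [apply Hne, farey_vert_inj; auto|].
  apply (reduced_not_vneg (farey_reduced w) (farey_reduced u)). auto.
Qed.

Lemma farey_vert_of_unimodular X Y : unimodular X Y -> exists x : farey_vert, represents x X.
Proof.
  intros Hd. pose proof (gcd_unimodular Hd) as Hg. unfold represents.
  destruct X as [x1 x2]. simpl in Hg.
  assert (Hr : reduced (x1, x2) \/ reduced (vneg (x1, x2))).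
  { unfold reduced, vneg; simpl. rewrite Z.gcd_opp_l, Z.gcd_opp_r.
    destruct (Z.lt_total x2 0) as [H|[->|H]]; [right; split; auto; lia| |left; split; auto].
    rewrite Z.gcd_0_r in Hg. destruct (Z.abs_spec x1) as [[_ E]|[_ E]]; rewrite E in Hg;
      [left|right]; split; try rewrite Z.gcd_0_r; lia. }
  destruct Hr as [Hr|Hr]; [exists (exist _ _ Hr); left|exists (exist _ _ Hr); right]; reflexivity.
Qed.

Lemma coord_prod_zero X Y w : unimodular X Y -> reduced w -> coord_prod X Y w = 0 ->
  w = X \/ w = vneg X \/ w = Y \/ w = vneg Y.
Proof.
  intros Hd [Hg _] H0.
  assert (HdY : unimodular Y X) by (apply unimodular_sym; auto).
  unfold coord_prod in H0.
  assert (d0 : det X Y <> 0) by (destruct Hd as [-> | ->]; discriminate).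
  apply Z.mul_eq_0 in H0 as [H0|H0]; apply Z.mul_eq_0 in H0 as [H0|H0]; try contradiction.
  - destruct (det_zero_associated w Y Hg (gcd_unimodular HdY) H0); tauto.
  - rewrite det_anti in H0.
    destruct (det_zero_associated w X Hg (gcd_unimodular Hd)); [lia|tauto|tauto].
Qed.

Lemma coord_prod_zero_vert X Y (w : farey_vert) : unimodular X Y ->
  coord_prod X Y (proj1_sig w) = 0 -> represents w X \/ represents w Y.
Proof. intros Hd Hz. unfold represents. destruct (coord_prod_zero Hd (farey_reduced w) Hz); tauto. Qed.

(** Along an edge the sign of [coord_prod] never jumps from - to +, so a chain
    whose ends have opposite signs passes through a zero. *)
Lemma chain_coord_prod_zero X Y (l : list farey_vert) x : unimodular X Y ->
  chain farey_adj (x :: l) ->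
  coord_prod X Y (proj1_sig x) * coord_prod X Y (proj1_sig (last (x :: l) x)) <= 0 ->
  exists w, In w (x :: l) /\ coord_prod X Y (proj1_sig w) = 0.
Proof.
  intros Hd. set (f := fun w : farey_vert => coord_prod X Y (proj1_sig w)). fold (f x) (f (last (x :: l) x)).
  assert (Hf : forall a b, farey_adj a b -> ~ (f a < 0 /\ f b > 0)).
  { intros a b Hab. apply coord_prod_edge; auto. apply farey_adj_unimodular; auto. }
  assert (Hup : forall l x, chain farey_adj (x :: l) -> f x < 0 -> f (last (x :: l) x) > 0 ->
            exists w, In w (x :: l) /\ f w = 0).
  { clear x l. induction l as [|y l IH]; intros x Hc Hx Hl; [simpl in Hl; lia|].
    destruct Hc as [Hxy Hc].
    destruct (Z.lt_total (f y) 0) as [H|[H|H]]; [|exists y; simpl; auto|exfalso; apply (Hf x y Hxy); lia].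
    assert (Hl' : f (last (y :: l) y) > 0).
    { change (f (last (y :: l) x) > 0) in Hl. rewrite (last_indep _ y) in Hl by discriminate. exact Hl. }
    destruct (IH y Hc H Hl') as [w [Hw Hw0]]. exists w. simpl. auto. }
  intros Hc Hs. set (y := last (x :: l) x) in *.
  destruct (Z.lt_total (f x) 0) as [H1|[H1|H1]], (Z.lt_total (f y) 0) as [H2|[H2|H2]];
    try (exists x; simpl; auto; fail); try (exists y; split; [apply last_In; discriminate|auto]; fail);
    try nia.
  - apply Hup; auto. apply Z.lt_gt. exact H2.
  - destruct (rev (x :: l)) as [|z m] eqn:Er; [apply (f_equal (@length _)) in Er; simpl in Er;
      rewrite length_app in Er; simpl in Er; lia|].
    assert (Hz : z = y) by (pose proof (hd_error_rev x (l := x :: l) ltac:(discriminate)) as Hh;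
                            rewrite Er in Hh; injection Hh; auto).
    destruct (Hup m z) as [w [Hw Hw0]].
    + rewrite <- Er. apply chain_rev; auto. apply farey_adj_sym.
    + rewrite Hz. exact H2.
    + rewrite <- Er, (@last_rev _ (x :: l) x z eq_refl). apply Z.lt_gt. exact H1.
    + exists w. split; auto. rewrite in_rev, Er. auto.
Qed.

Lemma farey_det_zero (u v : farey_vert) : det (proj1_sig u) (proj1_sig v) = 0 -> u = v.
Proof.
  intros H. pose proof (farey_reduced u) as Hu. pose proof (farey_reduced v) as Hv.
  destruct (det_zero_associated _ _ (proj1 Hu) (proj1 Hv) H) as [E|E].
  - apply farey_vert_inj, E.
  - exfalso. exact (reduced_not_vneg Hu Hv E).
Qed.

(** Two non-adjacent vertices lie in opposite quadrants of some basis (X, Y):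
    writing v = m u + n e with n >= 2 for a basis (u, e), take
    X = k u + e and Y = (k + 1) u + e with k = m / n. *)
Lemma separating_basis u v : reduced u -> reduced v -> ~ unimodular u v -> det u v <> 0 ->
  exists X Y, unimodular X Y /\ coord_prod X Y u < 0 /\ coord_prod X Y v > 0.
Proof.
  unfold unimodular. intros Hu Hv H12 H0.
  destruct u as [a b], v as [c d]. destruct Hu as [Hgu _], Hv as [Hgv _]. simpl in Hgu, Hgv.
  unfold det in H0, H12; simpl in H0, H12.
  destruct (Z.gcd_bezout a b 1 Hgu) as [x [y Hxy]].
  assert (HU : exists e f, (a * f - b * e = 1 \/ a * f - b * e = -1) /\ (a*f - b*e) * (a*d - b*c) >= 2).
  { destruct (Z_lt_le_dec 0 (a*d - b*c)); [exists (-y), x|exists y, (-x)]; split; nia. }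
  destruct HU as [e [f [HD Hn]]].
  set (D := a * f - b * e) in *.
  assert (HD2 : D * D = 1) by (destruct HD as [-> | ->]; reflexivity).
  set (m := D * (c * f - d * e)). set (n := D * (a * d - b * c)).
  assert (Ec : c = m * a + n * e) by (transitivity (D * D * c); [rewrite HD2; ring|unfold m, n, D; ring]).
  assert (Ed : d = m * b + n * f) by (transitivity (D * D * d); [rewrite HD2; ring|unfold m, n, D; ring]).
  assert (Hn2 : n >= 2) by (unfold n; lia).
  clearbody m n.
  pose proof (Z.div_mod m n ltac:(lia)) as Hdm. pose proof (Z.mod_pos_bound m n ltac:(lia)) as Hmb.
  set (k := m / n) in *. set (r := m mod n) in *. clearbody k r.
  assert (Hr : r <> 0).
  { intros Hr0. rewrite Hr0 in Hdm.
    assert (Hnd : (n | 1)).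
    { rewrite <- Hgv. apply Z.gcd_greatest; [exists (k * a + e) | exists (k * b + f)]; nia. }
    apply Z.divide_1_r in Hnd. lia. }
  exists (k*a + e, k*b + f), ((k+1)*a + e, (k+1)*b + f). unfold coord_prod, det; simpl.
  split; [|split].
  - replace ((k * a + e) * ((k + 1) * b + f) - (k * b + f) * ((k + 1) * a + e)) with (- D)
      by (unfold D; ring). lia.
  - match goal with |- ?t < 0 => replace t with (- ((D * D) * (D * D))) by (unfold D; ring) end.
    rewrite HD2. lia.
  - rewrite Ec, Ed.
    match goal with |- ?t > 0 => replace t with ((D * D) * (D * D) * ((m - n * (k + 1)) * (k * n - m)))
      by (unfold D; ring) end.
    rewrite HD2, Hdm. nia.
Qed.

Lemma unimodular_shear U V s : unimodular U V -> (s = 1 \/ s = -1) -> unimodular (vadd U (vscale s V)) U.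
Proof.
  unfold unimodular. replace (det (vadd U (vscale s V)) U) with (- s * det U V)
    by (destruct U, V; unfold det, vadd, vscale; simpl; ring).
  intros [-> | ->] [-> | ->]; lia.
Qed.

Lemma coord_prod_basis U V w : coord_prod U V w = det U V * det U V * (det w V * det U w).
Proof. destruct U, V, w; unfold coord_prod, det; simpl; ring. Qed.

Lemma coord_prod_shear U V w s : s * s = 1 ->
  coord_prod U (vadd U (vscale s V)) w = det U V * det U V * ((s * det w V - det U w) * det U w).
Proof.
  intros Hs. transitivity (s * s * (det U V * det U V * ((s * det w V - det U w) * det U w)));
    [destruct U, V, w; unfold coord_prod, det, vadd, vscale; simpl; ring|rewrite Hs; ring].
Qed.

Lemma shear_sign_change s a b a' b' :
  (s = 1 \/ s = -1) -> b * b = 1 -> a' * a' = 1 -> 0 < s * (a * b) -> 0 < a * b * (a' * b') ->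
  (s * a - b) * b * ((s * a' - b') * b') <= 0.
Proof.
  intros Hs Hb Ha Hpos Hsame.
  assert (Hs2 : s * s = 1) by (destruct Hs as [-> | ->]; reflexivity).
  set (A := a * b) in *. set (B := a' * b') in *.
  assert (HsB : 0 < s * B).
  { assert (HA2 : 0 < A * A) by nia.
    apply (proj1 (Z.mul_pos_cancel_l (A * A) (s * B) HA2)).
    replace (A * A * (s * B)) with (s * A * (A * B)) by ring. nia. }
  assert (HB2 : (s * B) * (s * B) = b' * b').
  { unfold B. transitivity (s * s * (a' * a') * (b' * b')); [ring|]. rewrite Hs2, Ha. ring. }
  assert (F1 : 0 <= (s * a - b) * b).
  { replace ((s * a - b) * b) with (s * A - b * b) by (unfold A; ring). lia. }
  assert (F2 : (s * a' - b') * b' <= 0).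
  { replace ((s * a' - b') * b') with (s * B - b' * b') by (unfold B; ring). rewrite <- HB2. nia. }
  nia.
Qed.

(** A path between adjacent vertices u, v with inner vertices passes through
    u + v or u - v: in the basis (u, v) its inner vertices stay in one pair of
    opposite quadrants, and the basis (u, u ± v) splits that pair. *)
Lemma interior_through_shear (u v : farey_vert) p :
  unimodular (proj1_sig u) (proj1_sig v) -> is_path farey_adj p u v -> interior p <> [] ->
  exists s w, (s = 1 \/ s = -1) /\ In w (interior p) /\
    represents w (vadd (proj1_sig u) (vscale s (proj1_sig v))).
Proof.
  intros Hd Hp Hne. set (U := proj1_sig u) in *. set (V := proj1_sig v) in *.
  assert (Hd2 : det U V * det U V = 1) by (destruct Hd as [-> | ->]; reflexivity).
  assert (Huv : u <> v) by (intros <-; unfold U, V, unimodular, det in Hd; lia).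
  assert (Hnz : forall w, In w (interior p) -> coord_prod U V (proj1_sig w) <> 0).
  { intros w Hw H0. destruct (In_interior w Hp Hw) as [_ [Hwu Hwv]].
    destruct (coord_prod_zero_vert w Hd H0); [apply (not_represents Hwu)|apply (not_represents Hwv)]; auto. }
  destruct (path_interior_ends Hp Huv Hne) as [c [I [EI [Huc [Hkv HcI]]]]].
  set (k := last (c :: I) c) in *.
  assert (Hc : In c (interior p)) by (rewrite EI; left; auto).
  assert (Hk : In k (interior p)) by (rewrite EI; apply last_In; discriminate).
  apply farey_adj_unimodular in Huc, Hkv. fold U V in Huc, Hkv.
  set (W1 := proj1_sig c) in *. set (Wk := proj1_sig k) in *.
  assert (Hsame : 0 < det W1 V * det U W1 * (det Wk V * det U Wk)).
  { apply Z.nle_gt. intros Hle.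
    destruct (chain_coord_prod_zero I c Hd HcI) as [w [Hw Hw0]].
    { fold k W1 Wk. rewrite !coord_prod_basis, Hd2. lia. }
    apply (Hnz w); auto. rewrite EI. auto. }
  assert (Hshear : forall s, (s = 1 \/ s = -1) -> 0 < s * (det W1 V * det U W1) ->
            exists w, In w (interior p) /\ represents w (vadd U (vscale s V))).
  { intros s Hs Hpos.
    assert (Hs' : unimodular U (vadd U (vscale s V))) by (apply unimodular_sym, unimodular_shear; auto).
    destruct (chain_coord_prod_zero I c Hs' HcI) as [w [Hw Hw0]].
    { fold k W1 Wk. rewrite !coord_prod_shear, Hd2 by (destruct Hs as [-> | ->]; reflexivity).
      rewrite !Z.mul_1_l. apply shear_sign_change; auto.
      - destruct Huc as [-> | ->]; reflexivity.
      - destruct Hkv as [-> | ->]; reflexivity. }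
    rewrite <- EI in Hw. exists w. split; auto.
    destruct (coord_prod_zero_vert w Hs' Hw0) as [E|E]; auto. exfalso.
    destruct (In_interior w Hp Hw) as [_ [Hwu _]]. exact (not_represents Hwu E). }
  destruct (Z_lt_le_dec 0 (det W1 V * det U W1)) as [Hpos|Hneg].
  - destruct (Hshear 1) as [w Hw]; [auto|lia|]. exists 1, w. auto.
  - assert (HA : det W1 V * det U W1 <> 0) by (intros E; rewrite E in Hsame; lia).
    destruct (Hshear (-1)) as [w Hw]; [auto|lia|]. exists (-1), w. auto.
Qed.

Lemma farey_separator (u v : farey_vert) : u <> v -> exists S, separates Farey [u] [v] S.
Proof.
  intros Huv.
  destruct (Z.eq_dec (det (proj1_sig u) (proj1_sig v)) 0) as [H0|H0];
    [exfalso; apply Huv, farey_det_zero; auto|].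
  destruct (classic (unimodular (proj1_sig u) (proj1_sig v))) as [Hadj|Hnadj].
  - destruct (farey_vert_of_unimodular (unimodular_shear Hadj (or_introl eq_refl))) as [m1 Hm1].
    destruct (farey_vert_of_unimodular (unimodular_shear Hadj (or_intror eq_refl))) as [m2 Hm2].
    exists [m1; m2]. apply separates_single. intros p Hp Hne.
    destruct (interior_through_shear Hadj Hp Hne) as [s [w [[-> | ->] [Hw Hws]]]];
      [exists m1|exists m2]; rewrite <- (represents_unique Hm1 Hws) || rewrite <- (represents_unique Hm2 Hws);
      simpl; auto.
  - destruct (separating_basis (farey_reduced u) (farey_reduced v) Hnadj H0) as [X [Y [HXY [Hu Hv]]]].
    destruct (farey_vert_of_unimodular HXY) as [x Hx].
    destruct (farey_vert_of_unimodular (unimodular_sym HXY)) as [y Hy].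
    exists [x; y]. apply separates_single. intros p Hp Hne.
    assert (Hc : chain farey_adj (u :: interior p ++ [v])).
    { pose proof (path_eq Hp Huv) as E. destruct Hp as [_ [_ [_ Hc]]]. rewrite E in Hc. exact Hc. }
    destruct (chain_coord_prod_zero _ _ HXY Hc) as [w [Hw Hw0]].
    { rewrite app_comm_cons, last_last. nia. }
    assert (Hwi : In w (interior p)).
    { destruct Hw as [<-|Hw]; [lia|].
      apply in_app_or in Hw as [|[<-|[]]]; [auto|lia]. }
    destruct (coord_prod_zero_vert w HXY Hw0) as [E|E];
      [exists x; rewrite <- (represents_unique Hx E)|exists y; rewrite <- (represents_unique Hy E)];
      simpl; auto.
Qed.

End FareySeparators.

Definition farey_infinity : farey_vert := exist _ (1, 0)%Z (conj eq_refl (or_intror (conj eq_refl eq_refl))).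
Definition farey_zero : farey_vert := exist _ (0, 1)%Z (conj eq_refl (or_introl eq_refl)).

Fixpoint count_prop {A : Type} (P : A -> Prop) (l : list A) : nat :=
  match l with
  | [] => 0
  | x :: l' => (if excluded_middle_informative (P x) then 1 else 0) + count_prop P l'
  end.

Lemma count_prop_le {A : Type} (P Q : A -> Prop) l :
  (forall x, In x l -> P x -> Q x) -> count_prop P l <= count_prop Q l.
Proof.
  induction l as [|x l IH]; simpl; intros H; auto.
  specialize (IH (fun y Hy => H y (or_intror Hy))).
  destruct (excluded_middle_informative (P x)), (excluded_middle_informative (Q x));
    try (exfalso; eauto; fail); lia.
Qed.

Lemma count_prop_lt {A : Type} (P Q : A -> Prop) l : (forall x, In x l -> P x -> Q x) ->
  (exists x, In x l /\ Q x /\ ~ P x) -> count_prop P l < count_prop Q l.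
Proof.
  induction l as [|x l IH]; simpl; intros H [y [Hy [HQ HP]]]; [destruct Hy|].
  pose proof (count_prop_le P Q l (fun z Hz => H z (or_intror Hz))) as Hle.
  destruct Hy as [<-|Hy].
  - destruct (excluded_middle_informative (P x)); [contradiction|].
    destruct (excluded_middle_informative (Q x)); [lia|contradiction].
  - assert (count_prop P l < count_prop Q l) by (apply IH; eauto).
    destruct (excluded_middle_informative (P x)), (excluded_middle_informative (Q x));
      try (exfalso; eauto; fail); lia.
Qed.

Section FareyConnectivity.
Local Open Scope Z_scope.

(** Descend along the denominators: (p, q) is adjacent to a reduced (r, s)
    with 0 <= s < q, obtained from a Bezout relation p s - q r = 1. *)
Lemma walk_to_infinity_bounded n : forall w : farey_vert, (Z.to_nat (snd (proj1_sig w)) <= n)%nat ->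
  exists l, walk farey_adj l w farey_infinity.
Proof.
  induction n as [|n IH]; intros w Hn.
  - destruct (farey_reduced w) as [_ [H|[Hq Hp]]]; [lia|].
    assert (w = farey_infinity) as ->
      by (apply farey_vert_inj; destruct (proj1_sig w); simpl in *; subst; auto).
    exists [farey_infinity]. apply walk_single.
  - pose proof (farey_reduced w) as [Hg Hq]. destruct (proj1_sig w) as [p q] eqn:Ew. simpl in Hg, Hq, Hn.
    destruct (Z_le_gt_dec q 1) as [Hq1|Hq1].
    + destruct Hq as [Hq|[Hq0 Hp1]]; [|apply (IH w); rewrite Ew; simpl; lia].
      exists [w; farey_infinity]. apply walk_edge, farey_adj_unimodular.
      rewrite Ew. unfold unimodular, det; simpl. lia.
    + destruct (Z.gcd_bezout p q 1 Hg) as [x [y Hxy]].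
      pose proof (Z.div_mod x q ltac:(lia)) as Hdm. pose proof (Z.mod_pos_bound x q ltac:(lia)) as Hmb.
      set (k := x / q) in *. set (s := x mod q) in *. clearbody k s.
      set (r := - y - k * p).
      assert (Hdet : p * s - q * r = 1) by (unfold r; nia).
      assert (Hs0 : s <> 0).
      { intros E. rewrite E in Hdet. assert (Hd : (q | 1)) by (exists (- r); lia).
        apply Z.divide_1_r in Hd. lia. }
      assert (Hn2 : reduced (r, s)).
      { split; [|left; simpl; lia]. apply Z.bezout_1_gcd. exists (- q), p. simpl. lia. }
      destruct (IH (exist _ _ Hn2)) as [l Hl]; [simpl; lia|].
      exists (w :: l). eapply walk_cons; [|exact Hl].
      apply farey_adj_unimodular. rewrite Ew. unfold unimodular, det; simpl. lia.
Qed.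

Lemma walk_to_infinity (w : farey_vert) : exists l, walk farey_adj l w farey_infinity.
Proof. eapply walk_to_infinity_bounded, le_n. Qed.

Definition in_cone (U V x : vec) : Prop :=
  exists m n, 0 <= m /\ 0 <= n /\ x = (m * fst U + n * fst V, m * snd U + n * snd V).
Definition edge_in_cone (U V : vec) (e : farey_vert * farey_vert) : Prop :=
  in_cone U V (proj1_sig (fst e)) /\ in_cone U V (proj1_sig (snd e)).

Lemma det_mediant_l U V : det U (vadd U V) = det U V.
Proof. destruct U, V; unfold det, vadd; simpl; ring. Qed.

Lemma det_mediant_r U V : det (vadd U V) V = det U V.
Proof. destruct U, V; unfold det, vadd; simpl; ring. Qed.

Lemma farey_mediant (u v : farey_vert) : unimodular (proj1_sig u) (proj1_sig v) ->
  exists m : farey_vert, proj1_sig m = vadd (proj1_sig u) (proj1_sig v).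
Proof.
  intros Hd.
  assert (Hn : reduced (vadd (proj1_sig u) (proj1_sig v))).
  { split.
    - apply (gcd_unimodular (Y := proj1_sig u)).
      unfold unimodular in *. rewrite det_anti, det_mediant_l. lia.
    - left. pose proof (farey_reduced u) as [_ Hu]. pose proof (farey_reduced v) as [_ Hv].
      destruct (proj1_sig u) as [a b], (proj1_sig v) as [c d].
      unfold unimodular, vadd, det in *; simpl in *. lia. }
  exists (exist _ _ Hn). reflexivity.
Qed.

Lemma unimodular_independent (U V : vec) a b : unimodular U V ->
  a * fst U + b * fst V = 0 -> a * snd U + b * snd V = 0 -> a = 0 /\ b = 0.
Proof.
  destruct U as [u1 u2], V as [v1 v2]. unfold unimodular, det; simpl. intros Hd H1 H2.
  assert (Ha : a * (u1 * v2 - u2 * v1) = 0).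
  { replace (a * (u1 * v2 - u2 * v1)) with ((a * u1 + b * v1) * v2 - (a * u2 + b * v2) * v1) by ring.
    rewrite H1, H2. ring. }
  assert (Hb : b * (u1 * v2 - u2 * v1) = 0).
  { replace (b * (u1 * v2 - u2 * v1)) with ((a * u2 + b * v2) * u1 - (a * u1 + b * v1) * u2) by ring.
    rewrite H1, H2. ring. }
  destruct Hd as [E|E]; rewrite E in Ha, Hb; lia.
Qed.

Lemma in_cone_l U V : in_cone U V U.
Proof. exists 1, 0. destruct U, V; cbn [fst snd]. split; [lia|split; [lia|f_equal; ring]]. Qed.

Lemma in_cone_r U V : in_cone U V V.
Proof. exists 0, 1. destruct U, V; cbn [fst snd]. split; [lia|split; [lia|f_equal; ring]]. Qed.

Lemma in_cone_mediant_l U V x : in_cone U (vadd U V) x -> in_cone U V x.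
Proof.
  intros [a [b [Ha [Hb ->]]]]. exists (a + b), b. split; [lia|split; [lia|]].
  destruct U, V; unfold vadd; simpl; f_equal; ring.
Qed.

Lemma in_cone_mediant_r U V x : in_cone (vadd U V) V x -> in_cone U V x.
Proof.
  intros [a [b [Ha [Hb ->]]]]. exists a, (a + b). split; [lia|split; [lia|]].
  destruct U, V; unfold vadd; simpl; f_equal; ring.
Qed.

Lemma not_in_cone_mediant_l U V : unimodular U V -> ~ in_cone U (vadd U V) V.
Proof.
  intros Hd [a [b [Ha [Hb E]]]].
  destruct (unimodular_independent (a + b) (b - 1) Hd); destruct U, V; unfold vadd in E; simpl in *;
    injection E; intros; lia.
Qed.

Lemma not_in_cone_mediant_r U V : unimodular U V -> ~ in_cone (vadd U V) V U.
Proof.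
  intros Hd [a [b [Ha [Hb E]]]].
  destruct (unimodular_independent (a - 1) (a + b) Hd); destruct U, V; unfold vadd in E; simpl in *;
    injection E; intros; lia.
Qed.

Lemma count_subcone (u v : farey_vert) U' V' E :
  (forall x, in_cone U' V' x -> in_cone (proj1_sig u) (proj1_sig v) x) ->
  ~ (in_cone U' V' (proj1_sig u) /\ in_cone U' V' (proj1_sig v)) -> In (u, v) E \/ In (v, u) E ->
  (count_prop (edge_in_cone U' V') E < count_prop (edge_in_cone (proj1_sig u) (proj1_sig v)) E)%nat.
Proof.
  intros Hsub Hout Huv. apply count_prop_lt.
  - intros e _ [H1 H2]. split; auto.
  - destruct Huv as [H|H]; [exists (u, v)|exists (v, u)]; unfold edge_in_cone; simpl;
      repeat split; auto using in_cone_l, in_cone_r; tauto.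
Qed.

(** An edge uv deleted from the Farey graph is bypassed through the mediant
    u + v; the recursion terminates since each half cone contains fewer
    deleted edges. *)
Lemma farey_edge_bypass_bounded n : forall (u v : farey_vert) E,
  unimodular (proj1_sig u) (proj1_sig v) ->
  count_prop (edge_in_cone (proj1_sig u) (proj1_sig v)) E = n -> exists w, walk (adj_minus Farey E) w u v.
Proof.
  induction n as [n IH] using (well_founded_induction lt_wf). intros u v E Hd Hn.
  destruct (classic (In (u, v) E \/ In (v, u) E)) as [Hin|Hnin].
  2:{ exists [u; v]. apply walk_edge. split; [apply farey_adj_unimodular; auto|tauto]. }
  destruct (farey_mediant u v Hd) as [m Hm].
  assert (Hlt1 : (count_prop (edge_in_cone (proj1_sig u) (proj1_sig m)) E < n)%nat).
  { rewrite <- Hn. apply count_subcone; auto; rewrite Hm.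
    - apply in_cone_mediant_l.
    - intros [_ H]. exact (not_in_cone_mediant_l Hd H). }
  assert (Hlt2 : (count_prop (edge_in_cone (proj1_sig m) (proj1_sig v)) E < n)%nat).
  { rewrite <- Hn. apply count_subcone; auto; rewrite Hm.
    - apply in_cone_mediant_r.
    - intros [H _]. exact (not_in_cone_mediant_r Hd H). }
  destruct (IH _ Hlt1 u m E) as [w1 Hw1]; [unfold unimodular; rewrite Hm, det_mediant_l; exact Hd|auto|].
  destruct (IH _ Hlt2 m v E) as [w2 Hw2]; [unfold unimodular; rewrite Hm, det_mediant_r; exact Hd|auto|].
  exists (w1 ++ tl w2). eapply walk_app; eauto.
Qed.

Lemma farey_edge_bypass (u v : farey_vert) E : farey_adj u v -> exists w, walk (adj_minus Farey E) w u v.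
Proof. intros H. apply farey_adj_unimodular in H. eapply farey_edge_bypass_bounded; eauto. Qed.

Lemma farey_inf_edge_connected : inf_edge_connected Farey.
Proof.
  split; [exists farey_zero, farey_infinity; intros E; apply (f_equal (@proj1_sig _ _)) in E; discriminate|].
  intros E' x y _ _.
  destruct (walk_to_infinity x) as [l1 H1], (walk_to_infinity y) as [l2 H2].
  destruct (walk_refine (R := farey_adj) (fun a b H => farey_edge_bypass a b E' H)
              (walk_app H1 (walk_rev farey_adj_sym H2))) as [w Hw].
  destruct (walk_to_path Hw) as [p [Hp _]]. exists p. split; auto. apply Forall_forall. auto.
Qed.

End FareyConnectivity.

Lemma farey_Pi_graph : Pi_graph Farey.
Proof.
  split; [exact farey_inf_edge_connected|].
  apply not_inf_indep_paths_iff. exact farey_separator.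
Qed.

Lemma inf_edge_connected_edge (G : graph) : inf_edge_connected G -> exists u v : G, adj G u v.
Proof.
  intros [[x [y Hxy]] Hcon]. destruct (Hcon [] x y I I) as [p [Hp _]].
  pose proof (path_eq Hp Hxy) as Ep. destruct Hp as [_ [_ [_ Hc]]]. rewrite Ep in Hc.
  destruct (interior p ++ [y]) as [|h t] eqn:Et; [destruct (interior p); discriminate|].
  exists x, h. apply (adj_minus_adj (E := [])), Hc.
Qed.

Lemma linked_of_inf_edge_connected (G : graph) (u v : G) :
  inf_edge_connected G -> u <> v -> linked G [u] [v] (fun z => z <> u /\ z <> v).
Proof.
  intros [_ Hcon] Huv E. destruct (Hcon E u v I I) as [q [Hq _]].
  exists q, u, v. split; [left; auto|split; [left; auto|split; [auto|]]].
  apply Forall_forall. intros z Hz. destruct (In_interior z Hq Hz) as [_ H]. exact H.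
Qed.

(** Split the region between the ends u, v of an edge by a core C; then C and
    {u, v} are linked through the two disjoint regions of the splitting. *)
Lemma minor_of_Pi_graph (G : graph) : Pi_graph G -> minor Farey G.
Proof.
  intros [Hiec HPi].
  destruct (inf_edge_connected_edge Hiec) as [u [v Huv]].
  assert (Hne : u <> v) by (intros ->; exact (adj_irrefl G v Huv)).
  destruct (@linked_splitting G HPi [u] [v] (fun z => z <> u /\ z <> v)) as [C [D1 [D2 Hs]]].
  { intros z [<-|[]] [E|[]]. auto. }
  { intros z [H1 H2]. split; intros [E|[]]; auto. }
  { apply linked_of_inf_edge_connected; auto. }
  destruct Hs as [Hne' Hcon HCD [a [c [[<-|[]] [Hc Hac]]]] _ H1 H2 H12 Hg1 Hg2].
  assert (HCuv : forall z, In z C -> ~ In z [u; v]) by (intros z Hz [E|[E|[]]]; destruct (HCD z Hz); auto).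
  apply (@farey_minor_of_model G HPi C [u; v] (fun b => if b then D1 else D2)).
  - intros []; (split; [exact HCuv|split]).
    + intros z Hz. destruct (H1 z Hz) as [[Hz1 Hz2] HzC]. split; auto. intros [E|[E|[]]]; auto.
    + apply linked_sym in Hg1. eapply linked_mono; [apply incl_refl| |intros z Hz; exact Hz|exact Hg1].
      intros z [<-|[]]. left; auto.
    + intros z Hz. destruct (H2 z Hz) as [[Hz1 Hz2] HzC]. split; auto. intros [E|[E|[]]]; auto.
    + eapply linked_mono; [apply incl_refl| |intros z Hz; exact Hz|exact Hg2].
      intros z [<-|[]]. right; left; auto.
  - exact H12.
  - exact Hcon.
  - apply connected_in_chain; [intros x y; apply adj_sym|]. simpl. auto.
  - exact Hne'.
  - discriminate.
  - exists c, u. split; [auto|split; [left; auto|apply adj_sym; auto]].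
Qed.

Theorem theorem1 :
  typical Farey /\ forall G : graph, typical G -> minor_equiv G Farey.
Proof.
  split.
  - split; [exact farey_Pi_graph|]. intros G' HG'. apply minor_of_Pi_graph, HG'.
  - intros G [HPi Hmin]. split; [apply Hmin, farey_Pi_graph|apply minor_of_Pi_graph, HPi].
Qed.
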